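(* Let $\mathbf a_0\in(0,\infty)^n$ lie in the interior of the domain of $\Phi$. The Frame condition (FC) holds at $\mathbf a_0$ if and only if $\Gamma_{ij}(\mathbf a_0)=0$ for all $i\neq j$ and the ratio $\tilde g_i(\mathbf a_0)/\Gamma_{ii}(\mathbf a_0)$ does not depend on $i\in\{1,\dots,n\}$ (its common value then being $\lambda(\mathbf a_0)$).
   Context: Multi-species zero-range setting: rates $g_1,\dots,g_n$ on $\mathbb Z_+^n$ satisfying the compatibility condition (INV) $g_i(\mathbf k)/g_i(\mathbf k-e_j)=g_j(\mathbf k)/g_j(\mathbf k-e_i)$ ($i\ne j$, $k^i,k^j>0$), so that product invariant measures $\nu_{\mathbf a}$ indexed by density $\mathbf a$ exist (one-site marginal proportional to $\boldsymbol\varphi^{\mathbf k}/\mathbf g!(\mathbf k)$ with fugacity $\boldsymbol\varphi=\Phi(\mathbf a)$). $\tilde g_i(\mathbf a)=E_{\nu_{\mathbf a}}[g_i(\boldsymbol\alpha(0))]$ and $\Gamma(\mathbf a)$ is the covariance matrix of $\boldsymbol\alpha(0)$ under $\nu_{\mathbf a}$. Frame condition (FC) at $\mathbf a_0$: there is $\lambda=\lambda(\mathbf a_0)$ with $\partial_{a^i}\tilde g_i(\mathbf a_0)=\lambda$ for every $i$ and $\partial_{a^j}\tilde g_i(\mathbf a_0)=0$ for all $i\ne j$. *)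

From Stdlib Require Import Reals Lra List ClassicalEpsilon.
Open Scope R_scope.

(* One-site configurations of n species: k : nat -> nat with k i = 0 for i >= n
   (species are indexed 0..n-1). *)
Definition cfg (n : nat) (k : nat -> nat) : Prop :=
  forall i, (n <= i)%nat -> k i = 0%nat.

Definition dec (k : nat -> nat) (j : nat) : nat -> nat :=
  fun i => if Nat.eqb i j then (k i - 1)%nat else k i.

Definition upd (a : nat -> R) (j : nat) (t : R) : nat -> R :=
  fun i => if Nat.eqb i j then t else a i.

Definition lsum {T : Type} (f : T -> R) (l : list T) : R :=
  fold_right (fun x acc => f x + acc) 0 l.

(* Unordered sum over Z_+^n of a NONNEGATIVE family: the supremum of all
   finite partial sums. *)
Definition HasSum (n : nat) (f : (nat -> nat) -> R) (s : R) : Prop :=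
  is_lub (fun x => exists l, NoDup l /\ Forall (cfg n) l /\ x = lsum f l) s.

Definition tsum (n : nat) (f : (nat -> nat) -> R) : R :=
  epsilon (inhabits 0) (fun s => HasSum n f s).

Fixpoint prodR (m : nat) (f : nat -> R) : R :=
  match m with O => 1 | S m' => prodR m' f * f m' end.

Definition prefix (k : nat -> nat) (j m : nat) : nat -> nat :=
  fun i => if Nat.ltb i j then k i else if Nat.eqb i j then m else 0%nat.

(* g!(k): product of the rates along the path filling species 0, then 1, ...;
   under (INV) it is path independent and g!(k)/g!(k-e_i) = g_i(k). *)
Definition gfact (g : nat -> (nat -> nat) -> R) (n : nat) (k : nat -> nat) : R :=
  prodR n (fun j => prodR (k j) (fun m => g j (prefix k j (S m)))).

Definition weight g n (phi : nat -> R) (k : nat -> nat) : R :=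
  prodR n (fun j => phi j ^ k j) / gfact g n k.

Definition Zpart g n phi : R := tsum n (weight g n phi).
Definition expect g n phi (F : (nat -> nat) -> R) : R :=
  tsum n (fun k => F k * weight g n phi k) / Zpart g n phi.

Definition in_fug_domain g n (phi : nat -> R) : Prop :=
  (forall i, (i < n)%nat -> 0 < phi i) /\
  exists eps, 0 < eps /\ forall psi : nat -> R,
    (forall i, (i < n)%nat -> 0 < psi i /\ Rabs (psi i - phi i) < eps) ->
    exists s, HasSum n (weight g n psi) s.

Definition density g n phi (i : nat) : R := expect g n phi (fun k => INR (k i)).

Definition zr_rates (g : nat -> (nat -> nat) -> R) (n : nat) : Prop :=
  forall i k, (i < n)%nat -> cfg n k ->
    (k i = 0%nat -> g i k = 0) /\ ((0 < k i)%nat -> 0 < g i k).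

Definition INV (g : nat -> (nat -> nat) -> R) (n : nat) : Prop :=
  forall i j k, (i < n)%nat -> (j < n)%nat -> i <> j -> cfg n k ->
    (0 < k i)%nat -> (0 < k j)%nat ->
    g i k / g i (dec k j) = g j k / g j (dec k i).

(* Phi is the inverse of the density map on a neighbourhood of a0, i.e.
   a0 lies in the interior of the domain of Phi. *)
Definition fugacity_map_near g n (Phi : (nat -> R) -> (nat -> R)) (a0 : nat -> R) : Prop :=
  exists eps, 0 < eps /\ forall a : nat -> R,
    (forall i, (i < n)%nat -> Rabs (a i - a0 i) < eps) ->
    in_fug_domain g n (Phi a) /\
    forall i, (i < n)%nat -> density g n (Phi a) i = a i.

Definition gtilde g n Phi (i : nat) (a : nat -> R) : R := expect g n (Phi a) (g i).
Definition Gamma g n Phi (i j : nat) (a : nat -> R) : R :=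
  expect g n (Phi a) (fun k => INR (k i) * INR (k j))
  - expect g n (Phi a) (fun k => INR (k i)) * expect g n (Phi a) (fun k => INR (k j)).

Definition FC_with g n Phi (a0 : nat -> R) (lam : R) : Prop :=
  forall i j, (i < n)%nat -> (j < n)%nat ->
    derivable_pt_lim (fun t => gtilde g n Phi i (upd a0 j t)) (a0 j)
      (if Nat.eqb i j then lam else 0).

Definition FC g n Phi a0 : Prop := exists lam, FC_with g n Phi a0 lam.

From Stdlib Require Import Reals Lra Lia List Wf_nat.
From Stdlib Require Import ClassicalEpsilon FunctionalExtensionality PropExtensionality.
Open Scope R_scope.

(** Write phi0 = Phi(a0).  Two facts drive the proof.
    (1) Under (INV), g!(k) is path independent, so g_i(k) w(k) = phi_i w(k - e_i)
        and g~_i(a) = E_{Phi(a)}[g_i] = Phi(a)_i: (FC) says that the fugacity map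
        Phi has Jacobian lambda I at a0.
    (2) The density map phi |-> R(phi) is differentiable at phi0 in the relative
        coordinates de = phi/phi0 - 1, with Jacobian the covariance matrix
        Gamma(a0), and its inverse Phi is continuous (a relative-entropy bound).
    Since R o Phi = id near a0, the chain rule turns (1) into
    Gamma(a0) diag(lambda/phi0) = I, and conversely a diagonal Gamma(a0) with
    Gamma_ii = phi0_i/lambda makes Phi differentiable with Jacobian lambda I. *)

Lemma Rabs_le_between x y : Rabs x <= y -> -y <= x <= y.
Proof. unfold Rabs; destruct (Rcase_abs x); lra. Qed.

Lemma div_nonneg a b : 0 <= a -> 0 < b -> 0 <= a / b.
Proof. intros Ha Hb. unfold Rdiv. apply Rmult_le_pos; [auto|left; apply Rinv_0_lt_compat; auto]. Qed.

Lemma lsum_app {T} (f : T -> R) l1 l2 : lsum f (l1 ++ l2) = lsum f l1 + lsum f l2.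
Proof. induction l1; simpl; [lra|rewrite IHl1; lra]. Qed.

Lemma lsum_nonneg {T} (f : T -> R) l : (forall x, In x l -> 0 <= f x) -> 0 <= lsum f l.
Proof.
  induction l as [|a l IH]; simpl; intros H; [lra|].
  assert (0 <= f a) by auto. assert (0 <= lsum f l) by auto. lra.
Qed.

Lemma lsum_ext {T} (f h : T -> R) l : (forall x, In x l -> f x = h x) -> lsum f l = lsum h l.
Proof. induction l; simpl; intros H; auto. rewrite H, IHl; auto. Qed.

Lemma lsum_le {T} (f h : T -> R) l : (forall x, In x l -> f x <= h x) -> lsum f l <= lsum h l.
Proof.
  induction l as [|a l IH]; simpl; intros H; [lra|].
  assert (f a <= h a) by auto. assert (lsum f l <= lsum h l) by auto. lra.
Qed.

Lemma lsum_plus {T} (f h : T -> R) l : lsum (fun x => f x + h x) l = lsum f l + lsum h l.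
Proof. induction l; simpl; lra. Qed.

Lemma lsum_scal {T} (c : R) (f : T -> R) l : lsum (fun x => c * f x) l = c * lsum f l.
Proof. induction l; simpl; [lra|rewrite IHl; lra]. Qed.

Lemma lsum_filter {T} (p : T -> bool) (h : T -> R) l :
  lsum (fun x => if p x then h x else 0) l = lsum h (filter p l).
Proof. induction l; simpl; auto. destruct (p a); simpl; rewrite IHl; ring. Qed.

Lemma lsum_map {T U} (f : T -> U) (h : U -> R) l : lsum h (map f l) = lsum (fun x => h (f x)) l.
Proof. induction l; simpl; auto. rewrite IHl; auto. Qed.

Lemma lsum_incl_le {T} (f : T -> R) (l1 : list T) : forall l2,
  NoDup l1 -> NoDup l2 -> incl l1 l2 -> (forall x, In x l2 -> 0 <= f x) ->
  lsum f l1 <= lsum f l2.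
Proof.
  induction l1 as [|a l1 IH]; intros l2 N1 N2 Hi Hf; simpl.
  - apply lsum_nonneg; auto.
  - assert (Ha : In a l2) by (apply Hi; simpl; auto).
    destruct (in_split _ _ Ha) as [u [v ->]].
    rewrite lsum_app; simpl. inversion N1; subst.
    assert (Huv : lsum f l1 <= lsum f (u ++ v)).
    { apply IH; auto.
      - eapply NoDup_remove_1; eauto.
      - intros x Hx. assert (Hx' : In x (u ++ a :: v)) by (apply Hi; simpl; auto).
        apply in_app_or in Hx'. apply in_or_app. destruct Hx' as [H|[H|H]]; auto.
        subst; contradiction.
      - intros x Hx; apply Hf. apply in_app_or in Hx; apply in_or_app; simpl; tauto. }
    rewrite lsum_app in Huv. lra.
Qed.

Lemma common_superlist {T} (P : T -> Prop) l1 l2 : Forall P l1 -> Forall P l2 ->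
  exists l, NoDup l /\ Forall P l /\ incl l1 l /\ incl l2 l.
Proof.
  intros H1 H2.
  pose (dec := fun x y : T => excluded_middle_informative (x = y)).
  exists (nodup dec (l1 ++ l2)). split; [apply NoDup_nodup|split].
  - apply Forall_forall. intros x Hx. apply nodup_In, in_app_or in Hx.
    destruct Hx; [eapply Forall_forall in H1|eapply Forall_forall in H2]; eauto.
  - split; intros x Hx; apply nodup_In; apply in_or_app; auto.
Qed.

Fixpoint sumR (m : nat) (f : nat -> R) : R :=
  match m with O => 0 | S m' => sumR m' f + f m' end.

Fixpoint minR (m : nat) (f : nat -> R) : R :=
  match m with O => 1 | S m' => Rmin (minR m' f) (f m') end.

Lemma sumR_ext m f f' : (forall j, (j < m)%nat -> f j = f' j) -> sumR m f = sumR m f'.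
Proof. induction m; simpl; intros H; auto. rewrite IHm, H; auto. Qed.

Lemma sumR_minus m f h : sumR m (fun j => f j - h j) = sumR m f - sumR m h.
Proof. induction m; simpl; [ring|rewrite IHm; ring]. Qed.

Lemma sumR_scal m c f : sumR m (fun j => c * f j) = c * sumR m f.
Proof. induction m; simpl; [ring|rewrite IHm; ring]. Qed.

Lemma sumR_const m c : sumR m (fun _ => c) = INR m * c.
Proof. induction m; [simpl; ring|]. rewrite S_INR. simpl. rewrite IHm. ring. Qed.

Lemma sumR_le m f h : (forall j, (j < m)%nat -> f j <= h j) -> sumR m f <= sumR m h.
Proof.
  induction m; simpl; intros H; [lra|].
  assert (f m <= h m) by (apply H; lia).
  assert (sumR m f <= sumR m h) by (apply IHm; intros; apply H; lia). lra.
Qed.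

Lemma sumR_nonneg m f : (forall j, (j < m)%nat -> 0 <= f j) -> 0 <= sumR m f.
Proof. intros H. rewrite <- (Rmult_0_r (INR m)), <- sumR_const. apply sumR_le; auto. Qed.

Lemma sumR_ge_term m f j : (j < m)%nat -> (forall j, (j < m)%nat -> 0 <= f j) -> f j <= sumR m f.
Proof.
  induction m; intros Hj H; [lia|]. simpl. destruct (Nat.eq_dec j m) as [->|Hne].
  - assert (0 <= sumR m f) by (apply sumR_nonneg; intros; apply H; lia). lra.
  - assert (f j <= sumR m f) by (apply IHm; [lia|intros; apply H; lia]).
    assert (0 <= f m) by (apply H; lia). lra.
Qed.

Lemma sumR_abs_bound m f b : (forall j, (j < m)%nat -> Rabs (f j) <= b) -> Rabs (sumR m f) <= INR m * b.
Proof.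
  induction m; intros H; [simpl; rewrite Rabs_R0; lra|].
  rewrite S_INR. simpl. eapply Rle_trans; [apply Rabs_triang|].
  assert (Rabs (sumR m f) <= INR m * b) by (apply IHm; intros; apply H; lia).
  assert (Rabs (f m) <= b) by (apply H; lia). lra.
Qed.

Lemma sumR_single m (f : nat -> R) j : (j < m)%nat ->
  (forall x, (x < m)%nat -> x <> j -> f x = 0) -> sumR m f = f j.
Proof.
  induction m; intros Hj H; [lia|]. simpl. destruct (Nat.eq_dec j m) as [->|Hne].
  - assert (E : sumR m f = sumR m (fun _ => 0)) by (apply sumR_ext; intros x Hx; apply H; lia).
    rewrite E, sumR_const. ring.
  - rewrite IHm, (H m); [ring|lia|lia|lia|intros; apply H; lia].
Qed.

Lemma sumR_exists_large m (u : nat -> R) b : INR m * b < sumR m u -> exists i, (i < m)%nat /\ b < u i.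
Proof.
  intros H. destruct (classic (exists i, (i < m)%nat /\ b < u i)) as [E|E]; auto. exfalso.
  assert (sumR m u <= sumR m (fun _ => b)).
  { apply sumR_le. intros j Hj. destruct (Rle_dec (u j) b); auto.
    exfalso; apply E; exists j; split; [auto|lra]. }
  rewrite sumR_const in H0. lra.
Qed.

Lemma minR_pos m f : (forall j, (j < m)%nat -> 0 < f j) -> 0 < minR m f.
Proof.
  induction m; simpl; intros H; [lra|].
  apply Rmin_glb_lt; [apply IHm; intros; apply H; lia|apply H; lia].
Qed.

Lemma minR_le m f j : (j < m)%nat -> minR m f <= f j.
Proof.
  induction m; simpl; intros H; [lia|]. destruct (Nat.eq_dec j m) as [->|Hne]; [apply Rmin_r|].
  eapply Rle_trans; [apply Rmin_l|]. apply IHm; lia.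
Qed.

Lemma prodR_ext m f f' : (forall j, (j < m)%nat -> f j = f' j) -> prodR m f = prodR m f'.
Proof. induction m; simpl; intros H; auto. rewrite IHm, H; auto. Qed.

Lemma prodR_pos m f : (forall j, (j < m)%nat -> 0 < f j) -> 0 < prodR m f.
Proof. induction m; simpl; intros H; [lra|]. apply Rmult_lt_0_compat; auto. Qed.

Lemma prodR_nonneg m f : (forall j, (j < m)%nat -> 0 <= f j) -> 0 <= prodR m f.
Proof. induction m; simpl; intros H; [lra|]. apply Rmult_le_pos; auto. Qed.

Lemma prodR_mult m f h : prodR m (fun j => f j * h j) = prodR m f * prodR m h.
Proof. induction m; simpl; [ring|rewrite IHm; ring]. Qed.

Lemma prodR_one_change m f f' j c : (j < m)%nat -> f j = f' j * c ->
  (forall x, (x < m)%nat -> x <> j -> f x = f' x) -> prodR m f = prodR m f' * c.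
Proof.
  induction m; intros Hj Hc Ho; [lia|]. simpl.
  destruct (Nat.eq_dec j m) as [->|Hne].
  - rewrite Hc, (prodR_ext m f f'); [ring|]. intros x Hx; apply Ho; lia.
  - rewrite IHm; [|lia|auto|intros; apply Ho; lia]. rewrite (Ho m); [ring|lia|lia].
Qed.

Lemma prodR_exp m (x : nat -> R) (k : nat -> nat) :
  prodR m (fun j => exp (x j) ^ k j) = exp (sumR m (fun j => INR (k j) * x j)).
Proof.
  assert (Hpow : forall z p, exp z ^ p = exp (INR p * z)).
  { induction p; [simpl; rewrite Rmult_0_l, exp_0; auto|].
    rewrite S_INR. simpl. rewrite IHp, <- exp_plus. f_equal; ring. }
  induction m; simpl; [rewrite exp_0; auto|]. rewrite IHm, Hpow, exp_plus; auto.
Qed.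

(** Unordered sums of nonnegative families indexed by configurations. *)

Definition pos_part (x : R) := Rmax x 0.
Definition neg_part (x : R) := Rmax (- x) 0.

Lemma pos_neg x : x = pos_part x - neg_part x.
Proof. unfold pos_part, neg_part, Rmax. destruct (Rle_dec x 0), (Rle_dec (-x) 0); lra. Qed.
Lemma pos_neg_combination x u v :
  pos_part x * u + neg_part x * v - (neg_part x * u + pos_part x * v) = x * (u - v).
Proof. rewrite (pos_neg x) at 5. ring. Qed.
Lemma pos_part_ge0 x : 0 <= pos_part x.
Proof. unfold pos_part, Rmax; destruct (Rle_dec x 0); lra. Qed.
Lemma neg_part_ge0 x : 0 <= neg_part x.
Proof. unfold neg_part, Rmax; destruct (Rle_dec (-x) 0); lra. Qed.

Section UnorderedSums.
Variable n : nat.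

Definition nneg (f : (nat -> nat) -> R) := forall k, cfg n k -> 0 <= f k.
Definition summable f := exists s, HasSum n f s.

Lemma HasSum_le f s l : HasSum n f s -> NoDup l -> Forall (cfg n) l -> lsum f l <= s.
Proof. intros [H _] N F. apply H. eauto. Qed.

Lemma HasSum_approx f s eps : HasSum n f s -> 0 < eps ->
  exists l, NoDup l /\ Forall (cfg n) l /\ s - eps < lsum f l.
Proof.
  intros [H1 H2] He.
  destruct (classic (exists l, NoDup l /\ Forall (cfg n) l /\ s - eps < lsum f l)) as [E|E]; auto.
  exfalso. assert (s <= s - eps); [|lra]. apply H2. intros x [l [N [F ->]]].
  destruct (Rle_lt_dec (lsum f l) (s - eps)); auto. exfalso; apply E; eauto.
Qed.

Lemma HasSum_intro f s :
  (forall l, NoDup l -> Forall (cfg n) l -> lsum f l <= s) ->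
  (forall eps, 0 < eps -> exists l, NoDup l /\ Forall (cfg n) l /\ s - eps < lsum f l) ->
  HasSum n f s.
Proof.
  intros H1 H2. split.
  - intros x [l [N [F ->]]]. auto.
  - intros b Hb. destruct (Rle_lt_dec s b); auto. exfalso.
    destruct (H2 (s - b)) as [l [N [F Hl]]]; [lra|].
    assert (lsum f l <= b) by (apply Hb; eauto). lra.
Qed.

Lemma tsum_eq f s : HasSum n f s -> tsum n f = s.
Proof. intros H. apply (is_lub_u _ _ _ (epsilon_spec _ _ (ex_intro _ s H))); auto. Qed.

Lemma tsum_spec f : summable f -> HasSum n f (tsum n f).
Proof. intros [s H]. rewrite (tsum_eq _ _ H); auto. Qed.

Lemma HasSum_ext f h s : (forall k, cfg n k -> f k = h k) -> HasSum n f s -> HasSum n h s.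
Proof.
  intros E H. assert (Hl : forall l, Forall (cfg n) l -> lsum f l = lsum h l).
  { intros l F; apply lsum_ext; intros x Hx; apply E; eapply Forall_forall; eauto. }
  apply HasSum_intro.
  - intros l N F; rewrite <- Hl; auto; eapply HasSum_le; eauto.
  - intros e He; destruct (HasSum_approx f s e H He) as [l [N [F L]]]; exists l; rewrite <- Hl; auto.
Qed.

Lemma tsum_ext f h : (forall k, cfg n k -> f k = h k) -> tsum n f = tsum n h.
Proof.
  intros E. unfold tsum. f_equal. apply functional_extensionality; intros s.
  apply propositional_extensionality; split; apply HasSum_ext; auto. intros; symmetry; auto.
Qed.

Lemma HasSum_plus f h s t : nneg f -> nneg h -> HasSum n f s -> HasSum n h t ->
  HasSum n (fun k => f k + h k) (s + t).
Proof.
  intros Pf Ph Hf Hh. apply HasSum_intro.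
  - intros l N F. rewrite lsum_plus.
    assert (lsum f l <= s) by (eapply HasSum_le; eauto).
    assert (lsum h l <= t) by (eapply HasSum_le; eauto). lra.
  - intros e He. destruct (HasSum_approx f s (e/2) Hf) as [l1 [N1 [F1 L1]]]; [lra|].
    destruct (HasSum_approx h t (e/2) Hh) as [l2 [N2 [F2 L2]]]; [lra|].
    destruct (common_superlist _ _ _ F1 F2) as [l [N [F [I1 I2]]]].
    exists l; split; auto; split; auto. rewrite lsum_plus.
    assert (lsum f l1 <= lsum f l)
      by (apply lsum_incl_le; auto; intros x Hx; apply Pf; eapply Forall_forall; eauto).
    assert (lsum h l2 <= lsum h l)
      by (apply lsum_incl_le; auto; intros x Hx; apply Ph; eapply Forall_forall; eauto).
    lra.
Qed.

Lemma HasSum_scal c f s : 0 <= c -> HasSum n f s -> HasSum n (fun k => c * f k) (c * s).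
Proof.
  intros Hc Hf. apply HasSum_intro.
  - intros l N F. rewrite lsum_scal. apply Rmult_le_compat_l; auto. eapply HasSum_le; eauto.
  - intros e He. destruct (Req_dec c 0) as [->|Hc0].
    + exists nil; split; [constructor|split; [constructor|simpl; lra]].
    + destruct (HasSum_approx f s (e / c) Hf) as [l [N [F L]]]; [apply Rdiv_lt_0_compat; lra|].
      exists l; split; auto; split; auto. rewrite lsum_scal.
      assert (c * (s - e / c) < c * lsum f l) by (apply Rmult_lt_compat_l; lra).
      replace (c * (s - e / c)) with (c * s - e) in H by (field; auto). lra.
Qed.

(* Comparison: a nonnegative family dominated by a summable one is summable,
   with a smaller sum (the sum exists by completeness of R). *)
Lemma HasSum_exists_le f h t : nneg f -> (forall k, cfg n k -> f k <= h k) -> HasSum n h t ->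
  exists s, HasSum n f s /\ s <= t.
Proof.
  intros Pf Le Hh.
  set (E := fun x => exists l, NoDup l /\ Forall (cfg n) l /\ x = lsum f l).
  assert (Hub : forall x, E x -> x <= t).
  { intros x [l [N [F ->]]]. apply Rle_trans with (lsum h l); [|eapply HasSum_le; eauto].
    apply lsum_le; intros; apply Le; eapply Forall_forall; eauto. }
  destruct (completeness E (ex_intro _ t Hub)) as [s Hs].
  { exists 0; exists nil; repeat constructor. }
  exists s; split; auto. apply Hs. exact Hub.
Qed.

Lemma summable_le f h : nneg f -> (forall k, cfg n k -> f k <= h k) -> summable h -> summable f.
Proof. intros P L [t H]. destruct (HasSum_exists_le f h t P L H) as [s [Hs _]]; exists s; auto. Qed.

Lemma tsum_le f h : nneg f -> (forall k, cfg n k -> f k <= h k) -> summable h -> tsum n f <= tsum n h.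
Proof.
  intros P L [t H]. destruct (HasSum_exists_le f h t P L H) as [s [Hs Hst]].
  rewrite (tsum_eq _ _ Hs), (tsum_eq _ _ H); auto.
Qed.

Lemma tsum_plus f h : nneg f -> nneg h -> summable f -> summable h ->
  tsum n (fun k => f k + h k) = tsum n f + tsum n h.
Proof. intros Pf Ph Sf Sh. apply tsum_eq. apply HasSum_plus; auto; apply tsum_spec; auto. Qed.

Lemma summable_plus f h : nneg f -> nneg h -> summable f -> summable h -> summable (fun k => f k + h k).
Proof. intros Pf Ph [s Hs] [t Ht]; exists (s + t); apply HasSum_plus; auto. Qed.

Lemma tsum_scal c f : 0 <= c -> summable f -> tsum n (fun k => c * f k) = c * tsum n f.
Proof. intros Hc Sf. apply tsum_eq. apply HasSum_scal; auto; apply tsum_spec; auto. Qed.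

Lemma summable_scal c f : 0 <= c -> summable f -> summable (fun k => c * f k).
Proof. intros Hc [s H]; exists (c * s); apply HasSum_scal; auto. Qed.

Lemma lsum_le_tsum f l : nneg f -> summable f -> NoDup l -> Forall (cfg n) l -> lsum f l <= tsum n f.
Proof. intros P S N F. eapply HasSum_le; eauto. apply tsum_spec; auto. Qed.

Lemma tsum_nonneg f : nneg f -> summable f -> 0 <= tsum n f.
Proof.
  intros P S. apply Rle_trans with (lsum f nil); [simpl; lra|].
  apply lsum_le_tsum; auto; constructor.
Qed.

Lemma HasSum_zero : HasSum n (fun _ => 0) 0.
Proof.
  apply HasSum_intro.
  - intros l _ _. clear. induction l; simpl; lra.
  - intros e He; exists nil; repeat constructor; simpl; lra.
Qed.

Lemma tsum_sumR m (h : nat -> (nat -> nat) -> R) :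
  (forall j, (j < m)%nat -> nneg (h j) /\ summable (h j)) ->
  nneg (fun k => sumR m (fun j => h j k)) /\ summable (fun k => sumR m (fun j => h j k)) /\
  tsum n (fun k => sumR m (fun j => h j k)) = sumR m (fun j => tsum n (h j)).
Proof.
  induction m; intros H; simpl.
  - split; [intros k _; lra|]. split; [exists 0; apply HasSum_zero|apply tsum_eq, HasSum_zero].
  - destruct IHm as [P [S E]]; [intros; apply H; lia|].
    destruct (H m) as [Pm Sm]; [lia|].
    split; [intros k Hk; specialize (P k Hk); specialize (Pm k Hk); simpl in *; lra|].
    split; [apply summable_plus; auto|].
    rewrite tsum_plus; auto. rewrite E; auto.
Qed.

Lemma tsum_diff_bound f h m b :
  nneg f -> nneg h -> nneg m -> nneg b -> summable f -> summable h -> summable m -> summable b ->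
  (forall k, cfg n k -> Rabs (f k - h k - m k) <= b k) ->
  Rabs (tsum n f - tsum n h - tsum n m) <= tsum n b.
Proof.
  intros Pf Ph Pm Pb Sf Sh Sm Sb H.
  assert (Phm : nneg (fun k => h k + m k)).
  { intros k Hk; specialize (Ph k Hk); specialize (Pm k Hk); lra. }
  assert (Shm : summable (fun k => h k + m k)) by (apply summable_plus; auto).
  assert (A : tsum n f <= tsum n (fun k => (h k + m k) + b k)).
  { apply tsum_le; auto; [|apply summable_plus; auto; intros k Hk; apply Pb; auto].
    intros k Hk. specialize (H k Hk). apply Rabs_le_between in H. lra. }
  assert (B : tsum n (fun k => h k + m k) <= tsum n (fun k => f k + b k)).
  { apply tsum_le; auto; [|apply summable_plus; auto].
    intros k Hk. specialize (H k Hk). apply Rabs_le_between in H. lra. }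
  rewrite tsum_plus in A, B; auto. rewrite tsum_plus in A, B; auto.
  apply Rabs_le; lra.
Qed.

Lemma pair_combination a b X Y : 0 <= a -> 0 <= b -> nneg X -> summable X -> nneg Y -> summable Y ->
  nneg (fun k => a * X k + b * Y k) /\ summable (fun k => a * X k + b * Y k) /\
  tsum n (fun k => a * X k + b * Y k) = a * tsum n X + b * tsum n Y.
Proof.
  intros Ha Hb PX SX PY SY.
  assert (PaX : nneg (fun k => a * X k)) by (intros k Hk; apply Rmult_le_pos; auto).
  assert (PbY : nneg (fun k => b * Y k)) by (intros k Hk; apply Rmult_le_pos; auto).
  assert (SaX := summable_scal a X Ha SX). assert (SbY := summable_scal b Y Hb SY).
  split; [intros k Hk; specialize (PaX k Hk); specialize (PbY k Hk); simpl in *; lra|].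
  split; [apply summable_plus; auto|]. rewrite tsum_plus, !tsum_scal; auto.
Qed.

Lemma signed_combination m (c : nat -> R) (X Y : nat -> (nat -> nat) -> R) :
  (forall j, (j < m)%nat -> nneg (X j) /\ summable (X j) /\ nneg (Y j) /\ summable (Y j)) ->
  exists mp mn, nneg mp /\ nneg mn /\ summable mp /\ summable mn /\
    (forall k, mp k - mn k = sumR m (fun j => c j * (X j k - Y j k))) /\
    tsum n mp - tsum n mn = sumR m (fun j => c j * (tsum n (X j) - tsum n (Y j))).
Proof.
  intros H.
  assert (Hpart : forall (a b : R -> R), (forall x, 0 <= a x) -> (forall x, 0 <= b x) ->
    forall j, (j < m)%nat -> let h := fun k => a (c j) * X j k + b (c j) * Y j k in
    nneg h /\ summable h /\ tsum n h = a (c j) * tsum n (X j) + b (c j) * tsum n (Y j)).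
  { intros a b Ha Hb j Hj. destruct (H j Hj) as [PX [SX [PY SY]]]. apply pair_combination; auto. }
  destruct (tsum_sumR m (fun j k => pos_part (c j) * X j k + neg_part (c j) * Y j k)) as [Pp [Sp Ep]].
  { intros j Hj. destruct (Hpart pos_part neg_part pos_part_ge0 neg_part_ge0 j Hj) as [P [S _]]; auto. }
  destruct (tsum_sumR m (fun j k => neg_part (c j) * X j k + pos_part (c j) * Y j k)) as [Pn [Sn En]].
  { intros j Hj. destruct (Hpart neg_part pos_part neg_part_ge0 pos_part_ge0 j Hj) as [P [S _]]; auto. }
  do 2 eexists. split; [exact Pp|]. split; [exact Pn|]. split; [exact Sp|]. split; [exact Sn|]. split.
  - intros k; cbv beta. rewrite <- sumR_minus. apply sumR_ext; intros j _. apply pos_neg_combination.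
  - rewrite Ep, En, <- sumR_minus. apply sumR_ext; intros j Hj.
    rewrite (proj2 (proj2 (Hpart pos_part neg_part pos_part_ge0 neg_part_ge0 j Hj))).
    rewrite (proj2 (proj2 (Hpart neg_part pos_part neg_part_ge0 pos_part_ge0 j Hj))).
    apply pos_neg_combination.
Qed.

Lemma tsum_linear_approx m (f f0 b : (nat -> nat) -> R) (c : nat -> R) (X Y : nat -> (nat -> nat) -> R) :
  nneg f -> nneg f0 -> nneg b -> summable f0 -> summable b ->
  (forall j, (j < m)%nat -> nneg (X j) /\ summable (X j) /\ nneg (Y j) /\ summable (Y j)) ->
  (forall k, cfg n k -> Rabs (f k - f0 k - sumR m (fun j => c j * (X j k - Y j k))) <= b k) ->
  summable f /\
  Rabs (tsum n f - tsum n f0 - sumR m (fun j => c j * (tsum n (X j) - tsum n (Y j)))) <= tsum n b.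
Proof.
  intros Pf P0 Pb S0 Sb HXY Happ.
  destruct (signed_combination m c X Y HXY) as [mp [mn [Pp [Pn [Sp [Sn [Ek Et]]]]]]].
  assert (Sf : summable f).
  { apply summable_le with (fun k => (f0 k + mp k) + b k); auto.
    - intros k Hk. specialize (Happ k Hk). rewrite <- Ek in Happ.
      apply Rabs_le_between in Happ. specialize (Pn k Hk). lra.
    - repeat apply summable_plus; auto; intros k Hk; try apply Rplus_le_le_0_compat; auto. }
  split; auto. rewrite <- Et.
  replace (tsum n f - tsum n f0 - (tsum n mp - tsum n mn))
    with ((tsum n f + tsum n mn) - tsum n f0 - tsum n mp) by ring.
  rewrite <- tsum_plus; auto.
  apply tsum_diff_bound; auto.
  - intros k Hk; apply Rplus_le_le_0_compat; auto.
  - apply summable_plus; auto.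
  - intros k Hk. specialize (Happ k Hk). rewrite <- Ek in Happ.
    replace (f k + mn k - f0 k - mp k) with (f k - f0 k - (mp k - mn k)) by ring. auto.
Qed.

End UnorderedSums.

Definition inc (k : nat -> nat) (j : nat) : nat -> nat :=
  fun i => if Nat.eqb i j then S (k i) else k i.

Definition ek (i : nat) : nat -> nat := fun m => if Nat.eqb m i then 1%nat else 0%nat.
Definition zk : nat -> nat := fun _ => 0%nat.

Fixpoint sizek (m : nat) (k : nat -> nat) : nat :=
  match m with O => O | S m' => (sizek m' k + k m')%nat end.

Lemma cfg_dec n k j : cfg n k -> cfg n (dec k j).
Proof. intros H i Hi. unfold dec. destruct (Nat.eqb i j); rewrite H; auto. Qed.

Lemma cfg_inc n k j : (j < n)%nat -> cfg n k -> cfg n (inc k j).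
Proof. intros Hj H i Hi. unfold inc. destruct (Nat.eqb_spec i j); [lia|auto]. Qed.

Lemma cfg_prefix n k j m : (j < n)%nat -> cfg n (prefix k j m).
Proof.
  intros Hj i Hi. unfold prefix. destruct (Nat.ltb_spec i j); [lia|].
  destruct (Nat.eqb_spec i j); [lia|auto].
Qed.

Lemma cfg_ek n i : (i < n)%nat -> cfg n (ek i).
Proof. intros Hi m Hm. unfold ek. destruct (Nat.eqb_spec m i); lia. Qed.

Lemma cfg_zk n : cfg n zk.
Proof. intros i _; reflexivity. Qed.

Lemma dec_inc k j : dec (inc k j) j = k.
Proof. apply functional_extensionality; intros i. unfold dec, inc. destruct (Nat.eqb_spec i j); lia. Qed.

Lemma inc_dec k j : (0 < k j)%nat -> inc (dec k j) j = k.
Proof.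
  intros H. apply functional_extensionality; intros i. unfold dec, inc.
  destruct (Nat.eqb_spec i j); subst; lia.
Qed.

Lemma dec_same k j : dec k j j = (k j - 1)%nat.
Proof. unfold dec; rewrite Nat.eqb_refl; auto. Qed.

Lemma dec_other k j i : i <> j -> dec k j i = k i.
Proof. intros H; unfold dec. destruct (Nat.eqb_spec i j); tauto. Qed.

Lemma dec_comm k i j : dec (dec k i) j = dec (dec k j) i.
Proof.
  apply functional_extensionality; intros x. unfold dec.
  destruct (Nat.eqb_spec x i); destruct (Nat.eqb_spec x j); auto.
Qed.

Lemma ek_same i : ek i i = 1%nat.
Proof. unfold ek; rewrite Nat.eqb_refl; auto. Qed.

Lemma ek_other i j : j <> i -> ek i j = 0%nat.
Proof. intros H; unfold ek; destruct (Nat.eqb_spec j i); lia. Qed.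

Lemma sizek_dec m k j : (j < m)%nat -> (0 < k j)%nat -> S (sizek m (dec k j)) = sizek m k.
Proof.
  assert (Hbelow : forall p k j, (p <= j)%nat -> sizek p (dec k j) = sizek p k).
  { induction p; simpl; intros; auto. rewrite IHp, dec_other; lia. }
  induction m; intros Hj Hk; [lia|]. simpl.
  destruct (Nat.eq_dec j m) as [->|Hne].
  - rewrite dec_same, Hbelow; lia.
  - rewrite dec_other; auto. rewrite <- IHm; lia.
Qed.

Lemma species_le_sizek n k j : (j < n)%nat -> INR (k j) <= INR (sizek n k).
Proof.
  intros Hj. apply le_INR. induction n; [lia|]. simpl.
  destruct (Nat.eq_dec j n); [subst; lia|]. specialize (IHn ltac:(lia)); lia.
Qed.

(* Any occupied species i is below a highest occupied species j (the last
   step of the filling path of k). *)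
Lemma exists_top n k i : (i < n)%nat -> (0 < k i)%nat -> cfg n k ->
  exists j, (i <= j)%nat /\ (j < n)%nat /\ (0 < k j)%nat /\ forall m, (j < m)%nat -> k m = 0%nat.
Proof.
  intros Hi Hki Hk.
  assert (H : forall d, (i + d < n)%nat -> (forall m, (i + d < m)%nat -> k m = 0%nat) ->
    exists j, (i <= j)%nat /\ (j < n)%nat /\ (0 < k j)%nat /\ forall m, (j < m)%nat -> k m = 0%nat).
  { induction d; intros Hd Hz.
    - exists i. rewrite Nat.add_0_r in *. repeat split; auto.
    - destruct (Nat.eq_dec (k (i + S d)%nat) 0%nat) as [E|E].
      + apply IHd; [lia|]. intros m Hm. destruct (Nat.eq_dec m (i + S d)%nat); subst; auto. apply Hz; lia.
      + exists (i + S d)%nat; repeat split; auto; lia. }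
  apply (H (n - 1 - i)%nat); [lia|]. intros m Hm; apply Hk; lia.
Qed.

Lemma HasSum_shift n G s i : (i < n)%nat -> nneg n G -> HasSum n G s ->
  HasSum n (fun k => if Nat.ltb 0 (k i) then G (dec k i) else 0) s.
Proof.
  intros Hi PG HG. apply HasSum_intro.
  - intros l N F. rewrite lsum_filter, <- (lsum_map (fun k => dec k i) G).
    apply (HasSum_le n G s); auto.
    + apply NoDup_map_NoDup_ForallPairs; [|apply NoDup_filter; auto].
      intros x y Hx Hy E. apply filter_In in Hx, Hy. destruct Hx as [_ Hx]; destruct Hy as [_ Hy].
      apply Nat.ltb_lt in Hx, Hy. rewrite <- (inc_dec x i Hx), <- (inc_dec y i Hy), E; auto.
    + apply Forall_forall. intros x Hx. apply in_map_iff in Hx. destruct Hx as [y [<- Hy]].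
      apply filter_In in Hy. apply cfg_dec. eapply Forall_forall; eauto. tauto.
  - intros e He. destruct (HasSum_approx n G s e HG He) as [l [N [F L]]].
    exists (map (fun k => inc k i) l). split; [|split].
    + apply NoDup_map_NoDup_ForallPairs; auto.
      intros x y _ _ E. rewrite <- (dec_inc x i), <- (dec_inc y i), E; auto.
    + apply Forall_forall. intros x Hx. apply in_map_iff in Hx. destruct Hx as [y [<- Hy]].
      apply cfg_inc; auto. eapply Forall_forall; eauto.
    + rewrite lsum_map. erewrite lsum_ext; [exact L|]. intros x _. simpl.
      unfold inc at 1. rewrite Nat.eqb_refl. simpl. rewrite dec_inc; auto.
Qed.

(** Path independence of g!: under (INV), g!(k) = g!(k - e_i) g_i(k) for every
    occupied species i, hence g_i(k) w(k) = phi_i w(k - e_i) and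
    E_phi[g_i] = phi_i. *)

Section Factorial.
Variable n : nat.
Variable g : nat -> (nat -> nat) -> R.
Hypothesis Hzr : zr_rates g n.

Lemma gfact_pos k : 0 < gfact g n k.
Proof.
  unfold gfact. apply prodR_pos. intros j Hj. apply prodR_pos. intros m Hm.
  apply (Hzr j (prefix k j (S m)) Hj (cfg_prefix n k j (S m) Hj)).
  unfold prefix. rewrite (proj2 (Nat.ltb_ge j j)), Nat.eqb_refl; lia.
Qed.

Lemma weight_pos phi k : (forall j, (j < n)%nat -> 0 < phi j) -> 0 < weight g n phi k.
Proof.
  intros H. unfold weight. apply Rdiv_lt_0_compat; [|apply gfact_pos].
  apply prodR_pos; intros; apply pow_lt; auto.
Qed.

Lemma Z_pos phi : (forall j, (j < n)%nat -> 0 < phi j) -> summable n (weight g n phi) -> 0 < Zpart g n phi.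
Proof.
  intros Hp S. unfold Zpart. apply Rlt_le_trans with (lsum (weight g n phi) (zk :: nil)).
  - simpl. rewrite Rplus_0_r. apply weight_pos; auto.
  - apply lsum_le_tsum; auto.
    + intros k _; left; apply weight_pos; auto.
    + constructor; [simpl; tauto|constructor].
    + constructor; [apply cfg_zk|constructor].
Qed.

(* Removing a particle of the highest occupied species divides g! by its rate;
   this is the defining recursion of g! along the filling path. *)
Lemma gfact_top k j : cfg n k -> (j < n)%nat -> (0 < k j)%nat -> (forall m, (j < m)%nat -> k m = 0%nat) ->
  gfact g n k = gfact g n (dec k j) * g j k.
Proof.
  intros Hk Hj Hkj Htop. unfold gfact.
  assert (Hpre : forall x t, (x <= j)%nat -> prefix (dec k j) x t = prefix k x t).
  { intros x t Hx. apply functional_extensionality; intros y. unfold prefix.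
    destruct (Nat.ltb_spec y x); auto. rewrite dec_other; auto; lia. }
  apply prodR_one_change with (j := j); auto.
  - destruct (k j) as [|m] eqn:E; [lia|]. rewrite dec_same, E. simpl.
    replace (m - 0)%nat with m by lia.
    assert (Hp : prefix k j (S m) = k).
    { apply functional_extensionality; intros x. unfold prefix.
      destruct (Nat.ltb_spec x j); auto. destruct (Nat.eqb_spec x j); subst; auto.
      rewrite Htop; auto; lia. }
    rewrite Hp. f_equal. apply prodR_ext. intros t Ht. rewrite Hpre; auto.
  - intros x Hx Hxj. rewrite dec_other; auto. destruct (Nat.lt_ge_cases x j).
    + apply prodR_ext; intros t Ht. rewrite Hpre; auto; lia.
    + rewrite Htop; [simpl; auto|lia].
Qed.

Hypothesis Hinv : INV g n.

Lemma rate_exchange k i j : cfg n k -> (i < n)%nat -> (j < n)%nat -> i <> j ->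
  (0 < k i)%nat -> (0 < k j)%nat ->
  g i k * g j (dec k i) = g j k * g i (dec k j).
Proof.
  intros Hk Hi Hj Hne Hki Hkj.
  assert (Hinvk := Hinv i j k Hi Hj Hne Hk Hki Hkj).
  assert (P1 : 0 < g i (dec k j)).
  { apply (Hzr i (dec k j) Hi (cfg_dec n k j Hk)). rewrite dec_other; auto. }
  assert (P2 : 0 < g j (dec k i)).
  { apply (Hzr j (dec k i) Hj (cfg_dec n k i Hk)). rewrite dec_other; auto. }
  unfold Rdiv in Hinvk.
  apply (Rmult_eq_compat_r (g i (dec k j) * g j (dec k i))) in Hinvk.
  field_simplify in Hinvk; lra.
Qed.

Lemma gfact_dec k i : cfg n k -> (i < n)%nat -> (0 < k i)%nat ->
  gfact g n k = gfact g n (dec k i) * g i k.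
Proof.
  remember (sizek n k) as N eqn:HN. revert k i HN.
  induction N as [N IH] using lt_wf_ind. intros k i HN Hk Hi Hki.
  destruct (exists_top n k i Hi Hki Hk) as [j [Hij [Hjn [Hkj Htop]]]].
  destruct (Nat.eq_dec i j) as [<-|Hne]; [apply gfact_top; auto|].
  assert (Hsz : S (sizek n (dec k j)) = N) by (subst; apply sizek_dec; auto).
  assert (Hi_j : (0 < dec k j i)%nat) by (rewrite dec_other; auto).
  assert (Hj_i : (0 < dec k i j)%nat) by (rewrite dec_other; auto; lia).
  assert (Htop_i : forall m, (j < m)%nat -> dec k i m = 0%nat)
    by (intros m Hm; rewrite dec_other; [apply Htop; auto|lia]).
  rewrite (gfact_top k j Hk Hjn Hkj Htop).
  rewrite (IH (sizek n (dec k j)) ltac:(lia) (dec k j) i eq_refl (cfg_dec n k j Hk) Hi Hi_j).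
  rewrite (gfact_top (dec k i) j (cfg_dec n k i Hk) Hjn Hj_i Htop_i).
  rewrite dec_comm, !Rmult_assoc. f_equal.
  rewrite Rmult_comm, <- (rate_exchange k i j Hk Hi Hjn Hne Hki Hkj). ring.
Qed.

Lemma rate_weight k i phi : cfg n k -> (i < n)%nat ->
  g i k * weight g n phi k = if Nat.ltb 0 (k i) then phi i * weight g n phi (dec k i) else 0.
Proof.
  intros Hk Hi. destruct (Nat.ltb_spec 0 (k i)).
  - unfold weight. rewrite (gfact_dec k i Hk Hi H).
    rewrite (prodR_one_change n (fun j => phi j ^ k j) (fun j => phi j ^ dec k i j) i (phi i)); auto.
    + assert (0 < gfact g n (dec k i)) by apply gfact_pos.
      assert (0 < g i k) by (apply (Hzr i k Hi Hk); auto). field; lra.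
    + rewrite dec_same. destruct (k i); [lia|]. simpl. replace (n0 - 0)%nat with n0 by lia. ring.
    + intros; rewrite dec_other; auto.
  - rewrite (proj1 (Hzr i k Hi Hk)); [ring|lia].
Qed.

Lemma expect_rate psi i : (i < n)%nat -> (forall j, (j < n)%nat -> 0 < psi j) ->
  summable n (weight g n psi) -> expect g n psi (g i) = psi i.
Proof.
  intros Hi Hp S. unfold expect.
  assert (HZ := Z_pos psi Hp S).
  rewrite (tsum_ext n _ (fun k => if Nat.ltb 0 (k i) then psi i * weight g n psi (dec k i) else 0))
    by (intros k Hk; apply rate_weight; auto).
  rewrite (tsum_eq n _ (psi i * tsum n (weight g n psi))).
  - unfold Zpart in *. field. lra.
  - apply (HasSum_shift n (fun k => psi i * weight g n psi k)); auto.
    + intros k Hk. apply Rmult_le_pos; left; [auto|apply weight_pos; auto].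
    + apply HasSum_scal; [left; auto|apply tsum_spec; auto].
Qed.

End Factorial.

(** Second-order expansion of products prod_j (1 + de_j)^(k_j) around 1. *)

Lemma pow_ge1 d m : 0 <= d -> 1 <= (1 + d) ^ m.
Proof. intros H; induction m; simpl; [lra|]. nra. Qed.

Lemma bernoulli y m : 0 <= y -> 1 + INR m * y <= (1 + y) ^ m.
Proof.
  intros H; induction m; [simpl; lra|]. rewrite S_INR; simpl.
  assert (0 <= INR m) by apply pos_INR. assert (1 <= (1 + y) ^ m) by (apply pow_ge1; auto). nra.
Qed.

(* A is 1 + a up to second order, with "size" S, perturbation d and growth X. *)
Definition second_order_close (A a S d X : R) : Prop :=
  Rabs (A - 1) <= S * d * X /\ Rabs (A - 1 - a) <= S ^ 2 * d ^ 2 * X /\ Rabs a <= S * d.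

Lemma second_order_close_mult A a S B b T d X Y :
  0 <= d -> 0 <= S -> 0 <= T -> 1 <= X -> 1 <= Y -> Rabs B <= Y ->
  second_order_close A a S d X -> second_order_close B b T d Y ->
  second_order_close (A * B) (a + b) (S + T) d (X * Y).
Proof.
  intros Hd HS HT HX HY HB [A1 [A2 A3]] [B1 [B2 B3]].
  assert (XY : Y <= X * Y) by nra.
  assert (HdX : 0 <= d * X) by nra.
  split; [|split].
  - replace (A * B - 1) with ((A - 1) * B + (B - 1)) by ring.
    eapply Rle_trans; [apply Rabs_triang|]. rewrite Rabs_mult.
    assert (Rabs (A - 1) * Rabs B <= S * d * X * Y) by (apply Rmult_le_compat; auto using Rabs_pos).
    assert (T * d * Y <= T * d * (X * Y)) by (apply Rmult_le_compat_l; nra).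
    lra.
  - replace (A * B - 1 - (a + b)) with ((A - 1 - a) * B + a * (B - 1) + (B - 1 - b)) by ring.
    eapply Rle_trans; [apply Rabs_triang|].
    eapply Rle_trans; [apply Rplus_le_compat_r, Rabs_triang|]. rewrite !Rabs_mult.
    assert (Rabs (A - 1 - a) * Rabs B <= S ^ 2 * d ^ 2 * X * Y)
      by (apply Rmult_le_compat; auto using Rabs_pos).
    assert (Rabs a * Rabs (B - 1) <= S * d * (T * d * Y))
      by (apply Rmult_le_compat; auto using Rabs_pos).
    assert (S * d * (T * d * Y) <= S * T * d ^ 2 * (X * Y)).
    { replace (S * d * (T * d * Y)) with (S * T * d ^ 2 * Y) by ring.
      apply Rmult_le_compat_l; auto. apply Rmult_le_pos; [nra|apply pow2_ge_0]. }
    assert (T ^ 2 * d ^ 2 * Y <= T ^ 2 * d ^ 2 * (X * Y))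
      by (apply Rmult_le_compat_l; auto; apply Rmult_le_pos; apply pow2_ge_0).
    replace ((S + T) ^ 2 * d ^ 2 * (X * Y))
      with (S ^ 2 * d ^ 2 * X * Y + 2 * (S * T * d ^ 2 * (X * Y)) + T ^ 2 * d ^ 2 * (X * Y)) by ring.
    assert (0 <= S * T * d ^ 2 * (X * Y))
      by (apply Rmult_le_pos; [apply Rmult_le_pos; [nra|apply pow2_ge_0]|nra]).
    lra.
  - eapply Rle_trans; [apply Rabs_triang|]. lra.
Qed.

Lemma pow_second_order de d m : Rabs de <= d ->
  second_order_close ((1 + de) ^ m) (INR m * de) (INR m) d ((1 + d) ^ m).
Proof.
  intros Hd. assert (d0 : 0 <= d) by (pose proof (Rabs_pos de); lra).
  induction m.
  - unfold second_order_close. simpl. rewrite !Rmult_0_l, Rminus_0_r, Rminus_diag, Rabs_R0.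
    split; [lra|split; lra].
  - rewrite S_INR. simpl. rewrite (Rmult_comm (1 + de)), (Rmult_comm (1 + d)).
    replace ((INR m + 1) * de) with (INR m * de + de) by ring.
    apply second_order_close_mult; auto using pos_INR, pow_ge1; try lra.
    + eapply Rle_trans; [apply Rabs_triang|]. rewrite Rabs_R1. lra.
    + unfold second_order_close. replace (1 + de - 1 - de) with 0 by ring.
      replace (1 + de - 1) with de by ring. rewrite Rabs_R0.
      split; [nra|split; [nra|lra]].
Qed.

Lemma prod_second_order (de : nat -> R) (d : R) m k : 0 <= d ->
  (forall j, (j < m)%nat -> Rabs (de j) <= d) ->
  second_order_close (prodR m (fun j => (1 + de j) ^ k j)) (sumR m (fun j => INR (k j) * de j))
    (INR (sizek m k)) d ((1 + d) ^ sizek m k).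
Proof.
  intros d0 Hd. induction m; simpl.
  - unfold second_order_close. replace (1 - 1) with 0 by ring. replace (0 - 0) with 0 by ring.
    rewrite Rabs_R0. repeat split; lra.
  - rewrite plus_INR, pow_add.
    assert (Hm : Rabs (de m) <= d) by (apply Hd; lia).
    assert (IH : second_order_close (prodR m (fun j => (1 + de j) ^ k j))
      (sumR m (fun j => INR (k j) * de j)) (INR (sizek m k)) d ((1 + d) ^ sizek m k))
      by (apply IHm; intros; apply Hd; lia).
    apply second_order_close_mult; auto using pos_INR, pow_ge1, pow_second_order.
    rewrite <- RPow_abs. apply pow_incr. split; [apply Rabs_pos|].
    eapply Rle_trans; [apply Rabs_triang|]. rewrite Rabs_R1. lra.
Qed.

(** First-order expansion of the weighted sums sum_k F(k) w_psi(k) in the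
    fugacity, psi = phi0 (1 + de), with a quadratic error bound.  The error is
    dominated by the weights w_phi0 (1 + y)^(5 |k|), summable for y small
    because phi0 lies in the interior of the convergence domain. *)

Lemma weight_scale n g phi0 psi de k : (forall j, (j < n)%nat -> psi j = phi0 j * (1 + de j)) ->
  weight g n psi k = weight g n phi0 k * prodR n (fun j => (1 + de j) ^ k j).
Proof.
  intros H. unfold weight.
  rewrite (prodR_ext n (fun j => psi j ^ k j) (fun j => phi0 j ^ k j * (1 + de j) ^ k j)).
  - rewrite prodR_mult. unfold Rdiv. ring.
  - intros j Hj. rewrite H; auto. apply Rpow_mult_distr.
Qed.

Lemma pow_le_pow5 T : 1 <= T -> T <= T ^ 5 /\ T * T <= T ^ 5 /\ T * T * T * T <= T ^ 5.
Proof.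
  intros H.
  assert (A : T ^ 1 <= T ^ 5) by (apply Rle_pow; auto; lia).
  assert (B : T ^ 2 <= T ^ 5) by (apply Rle_pow; auto; lia).
  assert (C : T ^ 4 <= T ^ 5) by (apply Rle_pow; auto; lia).
  simpl in *. rewrite !Rmult_1_r in *. repeat split; lra.
Qed.

Section Expansion.
Variable n : nat.
Variable g : nat -> (nat -> nat) -> R.
Hypothesis Hzr : zr_rates g n.
Variable phi0 : nat -> R.
Hypothesis Hphi0 : forall j, (j < n)%nat -> 0 < phi0 j.
Variable y : R.
Hypothesis Hy : 0 < y <= 1.

Definition Bw k := weight g n phi0 k * (1 + y) ^ (5 * sizek n k).
Hypothesis HB : summable n Bw.

Lemma Bw_nneg : nneg n Bw.
Proof. intros k _. unfold Bw. apply Rmult_le_pos; [left; apply weight_pos|apply pow_le]; auto; lra. Qed.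

Lemma size_growth k : let s := INR (sizek n k) in let T := (1 + y) ^ sizek n k in
  1 <= T /\ s <= T / y /\ 1 + s <= 2 * T / y /\ Bw k = weight g n phi0 k * T ^ 5.
Proof.
  intros s T. assert (T1 : 1 <= T) by (apply pow_ge1; lra).
  assert (Hb := bernoulli y (sizek n k) (ltac:(lra))). fold s T in Hb.
  assert (s0 : 0 <= s) by apply pos_INR.
  split; [auto|split; [|split]].
  - apply Rmult_le_reg_r with y; [lra|]. unfold Rdiv; rewrite Rmult_assoc, Rinv_l; lra.
  - apply Rmult_le_reg_r with y; [lra|]. unfold Rdiv; rewrite Rmult_assoc, Rinv_l; [nra|lra].
  - unfold Bw. rewrite Nat.mul_comm, pow_mult. auto.
Qed.

Variable F : (nat -> nat) -> R.
Hypothesis HF : forall k, cfg n k -> 0 <= F k <= 1 + INR (sizek n k).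

Lemma F_weight_bound k : cfg n k -> F k * weight g n phi0 k <= 2 / y * Bw k.
Proof.
  intros Hk. destruct (HF k Hk). destruct (size_growth k) as [T1 [Ts [T1s EB]]].
  set (T := (1 + y) ^ sizek n k) in *. assert (w := weight_pos n g Hzr phi0 k Hphi0).
  rewrite EB. destruct (pow_le_pow5 T T1) as [T5 _].
  assert (F k <= 2 / y * T ^ 5).
  { apply Rle_trans with (2 / y * T); [unfold Rdiv in *; lra|].
    apply Rmult_le_compat_l; auto. apply div_nonneg; lra. }
  replace (2 / y * (weight g n phi0 k * T ^ 5)) with (weight g n phi0 k * (2 / y * T ^ 5)) by ring.
  rewrite Rmult_comm. apply Rmult_le_compat_l; lra.
Qed.

Lemma F_moment_bound k j : cfg n k -> (j < n)%nat ->
  F k * INR (k j) * weight g n phi0 k <= 2 / y ^ 2 * Bw k.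
Proof.
  intros Hk Hj. destruct (HF k Hk). destruct (size_growth k) as [T1 [Ts [T1s EB]]].
  set (T := (1 + y) ^ sizek n k) in *. set (s := INR (sizek n k)) in *.
  assert (w := weight_pos n g Hzr phi0 k Hphi0).
  assert (kj := species_le_sizek n k j Hj). assert (0 <= INR (k j)) by apply pos_INR. fold s in kj.
  rewrite EB.
  assert (F k * INR (k j) <= 2 * T / y * (T / y)) by (apply Rmult_le_compat; lra).
  assert (T * T <= T ^ 5) by apply (pow_le_pow5 T T1).
  assert (2 * T / y * (T / y) <= 2 / y ^ 2 * T ^ 5).
  { replace (2 * T / y * (T / y)) with (2 / y ^ 2 * (T * T)) by (field; lra).
    apply Rmult_le_compat_l; auto. apply div_nonneg; [lra|apply pow_lt; lra]. }
  replace (F k * INR (k j) * weight g n phi0 k) with (weight g n phi0 k * (F k * INR (k j))) by ring.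
  replace (2 / y ^ 2 * (weight g n phi0 k * T ^ 5)) with (weight g n phi0 k * (2 / y ^ 2 * T ^ 5)) by ring.
  apply Rmult_le_compat_l; lra.
Qed.

Lemma F_remainder_bound k d : cfg n k -> 0 <= d <= y ->
  F k * weight g n phi0 k * (INR (sizek n k) ^ 2 * d ^ 2 * (1 + d) ^ sizek n k)
  <= d ^ 2 * (2 / y ^ 3) * Bw k.
Proof.
  intros Hk Hd. destruct (HF k Hk). destruct (size_growth k) as [T1 [Ts [T1s EB]]].
  set (T := (1 + y) ^ sizek n k) in *. set (s := INR (sizek n k)) in *.
  assert (w := weight_pos n g Hzr phi0 k Hphi0).
  assert (X1 : (1 + d) ^ sizek n k <= T) by (apply pow_incr; lra).
  assert (X0 : 0 <= (1 + d) ^ sizek n k) by (apply pow_le; lra).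
  assert (s0 : 0 <= s) by apply pos_INR.
  rewrite EB.
  assert (A1 : s ^ 2 <= (T / y) ^ 2) by (apply pow_incr; lra).
  assert (A2 : F k * s ^ 2 <= 2 * T / y * (T / y) ^ 2) by (apply Rmult_le_compat; try lra; apply pow_le; lra).
  assert (A3 : F k * s ^ 2 * (1 + d) ^ sizek n k <= 2 * T / y * (T / y) ^ 2 * T).
  { apply Rmult_le_compat; try lra. apply Rmult_le_pos; [lra|apply pow_le; lra]. }
  assert (T * T * T * T <= T ^ 5) by apply (pow_le_pow5 T T1).
  assert (A4 : 2 * T / y * (T / y) ^ 2 * T <= 2 / y ^ 3 * T ^ 5).
  { replace (2 * T / y * (T / y) ^ 2 * T) with (2 / y ^ 3 * (T * T * T * T)) by (field; lra).
    apply Rmult_le_compat_l; auto. apply div_nonneg; [lra|apply pow_lt; lra]. }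
  set (w0 := weight g n phi0 k) in *.
  replace (F k * w0 * (s ^ 2 * d ^ 2 * (1 + d) ^ sizek n k))
    with ((w0 * d ^ 2) * (F k * s ^ 2 * (1 + d) ^ sizek n k)) by ring.
  replace (d ^ 2 * (2 / y ^ 3) * (w0 * T ^ 5)) with ((w0 * d ^ 2) * (2 / y ^ 3 * T ^ 5)) by ring.
  apply Rmult_le_compat_l; [apply Rmult_le_pos; [lra|apply pow_le; lra]|lra].
Qed.

Lemma inv_pow_nonneg m : 0 <= 2 / y ^ m.
Proof. apply div_nonneg; [lra|apply pow_lt; lra]. Qed.

Lemma F_weight_nneg : nneg n (fun k => F k * weight g n phi0 k).
Proof. intros k Hk. destruct (HF k Hk). apply Rmult_le_pos; [lra|left; apply weight_pos; auto]. Qed.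

Lemma F_moment_nneg j : nneg n (fun k => F k * INR (k j) * weight g n phi0 k).
Proof.
  intros k Hk. destruct (HF k Hk). apply Rmult_le_pos; [apply Rmult_le_pos; [lra|apply pos_INR]|].
  left; apply weight_pos; auto.
Qed.

Lemma F_weight_summable : summable n (fun k => F k * weight g n phi0 k).
Proof.
  apply summable_le with (fun k => 2 / y * Bw k); auto using F_weight_nneg, F_weight_bound.
  apply summable_scal; auto. rewrite <- (pow_1 y). apply inv_pow_nonneg.
Qed.

Lemma F_moment_summable j : (j < n)%nat -> summable n (fun k => F k * INR (k j) * weight g n phi0 k).
Proof.
  intros Hj. apply summable_le with (fun k => 2 / y ^ 2 * Bw k); auto using F_moment_nneg.
  - intros k Hk; apply F_moment_bound; auto.
  - apply summable_scal; auto using inv_pow_nonneg.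
Qed.

Section Perturbation.
Variables (psi de : nat -> R) (d : R).
Hypothesis Hpsi : forall j, (j < n)%nat -> psi j = phi0 j * (1 + de j).
Hypothesis Hde : forall j, (j < n)%nat -> Rabs (de j) <= d.
Hypothesis Hd : 0 <= d <= y.

Lemma expansion_termwise k : cfg n k ->
  Rabs (F k * weight g n psi k - F k * weight g n phi0 k
        - sumR n (fun j => de j * (F k * INR (k j) * weight g n phi0 k - 0)))
  <= d ^ 2 * (2 / y ^ 3) * Bw k.
Proof.
  intros Hk. rewrite (weight_scale n g phi0 psi de k Hpsi).
  destruct (prod_second_order de d n k) as [_ [P2 _]]; [lra|auto|].
  eapply Rle_trans; [|apply (F_remainder_bound k d Hk Hd)].
  replace (F k * (weight g n phi0 k * prodR n (fun j => (1 + de j) ^ k j)) - F k * weight g n phi0 k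
           - sumR n (fun j => de j * (F k * INR (k j) * weight g n phi0 k - 0)))
    with (F k * weight g n phi0 k
          * (prodR n (fun j => (1 + de j) ^ k j) - 1 - sumR n (fun j => INR (k j) * de j))).
  - rewrite Rabs_mult, (Rabs_right (F k * weight g n phi0 k)) by (apply Rle_ge, F_weight_nneg; auto).
    apply Rmult_le_compat_l; [apply F_weight_nneg|]; auto.
  - rewrite (sumR_ext n (fun j => de j * (F k * INR (k j) * weight g n phi0 k - 0))
      (fun j => F k * weight g n phi0 k * (INR (k j) * de j))) by (intros; ring).
    rewrite sumR_scal. ring.
Qed.

Lemma expansion :
  summable n (fun k => F k * weight g n psi k) /\
  Rabs (tsum n (fun k => F k * weight g n psi k) - tsum n (fun k => F k * weight g n phi0 k)
        - sumR n (fun j => de j * tsum n (fun k => F k * INR (k j) * weight g n phi0 k)))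
   <= d ^ 2 * (2 / y ^ 3) * tsum n Bw.
Proof.
  assert (Hc : 0 <= d ^ 2 * (2 / y ^ 3)) by (apply Rmult_le_pos; [apply pow2_ge_0|apply inv_pow_nonneg]).
  assert (Ppsi : nneg n (fun k => F k * weight g n psi k)).
  { intros k Hk. destruct (HF k Hk). apply Rmult_le_pos; [lra|].
    rewrite (weight_scale n g phi0 psi de k Hpsi). apply Rmult_le_pos; [left; apply weight_pos; auto|].
    apply prodR_nonneg. intros j Hj. apply pow_le.
    specialize (Hde j Hj). apply Rabs_le_between in Hde. lra. }
  rewrite <- (tsum_scal n _ Bw Hc HB).
  replace (sumR n (fun j => de j * tsum n (fun k => F k * INR (k j) * weight g n phi0 k)))
    with (sumR n (fun j => de j * (tsum n (fun k => F k * INR (k j) * weight g n phi0 k)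
                                  - tsum n (fun _ => 0))))
    by (apply sumR_ext; intros; rewrite (tsum_eq n _ 0 (HasSum_zero n)); ring).
  apply tsum_linear_approx; auto using F_weight_nneg, F_weight_summable, expansion_termwise.
  - intros k Hk. apply Rmult_le_pos; [auto|apply Bw_nneg; auto].
  - apply summable_scal; auto.
  - intros j Hj. split; [apply F_moment_nneg|split; [apply F_moment_summable; auto|]].
    split; [intros k _; lra|exists 0; apply HasSum_zero].
Qed.

End Perturbation.

End Expansion.

Definition quotient_constant (Z0 Mb A C : R) : R :=
  2 * (C * Z0 ^ 2 + Mb * Z0 * C + A * Z0 * (A + C) + Mb * A * (A + C)) / Z0 ^ 3.

Lemma quotient_numerator_bound Z0 M Mb A C d z1 m1 rZ rM :
  0 < Z0 -> 0 <= M <= Mb -> 0 <= A -> 0 <= C -> 0 <= d ->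
  Rabs z1 <= A * d -> Rabs m1 <= A * d -> Rabs rZ <= C * d ^ 2 -> Rabs rM <= C * d ^ 2 ->
  Rabs (z1 + rZ) <= (A + C) * d ->
  Rabs (rM * Z0 ^ 2 - M * Z0 * rZ - m1 * Z0 * (z1 + rZ) + M * z1 * (z1 + rZ))
  <= d ^ 2 * (C * Z0 ^ 2 + Mb * Z0 * C + A * Z0 * (A + C) + Mb * A * (A + C)).
Proof.
  intros HZ HM HA HC Hd Hz Hm HrZ HrM He. set (e := z1 + rZ) in *.
  assert (t1 : Rabs (rM * Z0 ^ 2) <= C * d ^ 2 * Z0 ^ 2).
  { rewrite Rabs_mult, (Rabs_right (Z0 ^ 2)) by (apply Rle_ge, pow_le; lra).
    apply Rmult_le_compat_r; [apply pow_le; lra|auto]. }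
  assert (t2 : Rabs (M * Z0 * rZ) <= Mb * Z0 * (C * d ^ 2)).
  { rewrite !Rabs_mult, (Rabs_right M), (Rabs_right Z0) by lra.
    apply Rmult_le_compat; auto using Rabs_pos; [apply Rmult_le_pos; lra|].
    apply Rmult_le_compat_r; lra. }
  assert (t3 : Rabs (m1 * Z0 * e) <= A * d * Z0 * ((A + C) * d)).
  { rewrite !Rabs_mult, (Rabs_right Z0) by lra.
    apply Rmult_le_compat; auto using Rabs_pos; [apply Rmult_le_pos; auto using Rabs_pos; lra|].
    apply Rmult_le_compat_r; lra. }
  assert (t4 : Rabs (M * z1 * e) <= Mb * (A * d) * ((A + C) * d)).
  { rewrite !Rabs_mult, (Rabs_right M) by lra.
    apply Rmult_le_compat; auto using Rabs_pos; [apply Rmult_le_pos; auto using Rabs_pos; lra|].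
    apply Rmult_le_compat; auto using Rabs_pos; lra. }
  apply Rabs_le_between in t1, t2, t3, t4.
  replace (d ^ 2 * (C * Z0 ^ 2 + Mb * Z0 * C + A * Z0 * (A + C) + Mb * A * (A + C)))
    with (C * d ^ 2 * Z0 ^ 2 + Mb * Z0 * (C * d ^ 2) + A * d * Z0 * ((A + C) * d)
          + Mb * (A * d) * ((A + C) * d)) by ring.
  apply Rabs_le; lra.
Qed.

Lemma quotient_expansion Z0 M Mb A C d z1 m1 Zp Mp :
  0 < Z0 -> 0 <= M <= Mb -> 0 <= A -> 0 <= C -> 0 <= d <= 1 ->
  Rabs z1 <= A * d -> Rabs m1 <= A * d ->
  Rabs (Zp - Z0 - z1) <= C * d ^ 2 -> Rabs (Mp - M - m1) <= C * d ^ 2 ->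
  (A + C) * d <= Z0 / 2 ->
  Rabs (Mp / Zp - M / Z0 - (m1 / Z0 - (M / Z0) * (z1 / Z0))) <= d ^ 2 * quotient_constant Z0 Mb A C.
Proof.
  intros HZ HM HA HC Hd Hz Hm HrZ HrM Hs.
  set (rZ := Zp - Z0 - z1) in *. set (rM := Mp - M - m1) in *.
  assert (He : Rabs (z1 + rZ) <= (A + C) * d).
  { eapply Rle_trans; [apply Rabs_triang|].
    assert (C * d ^ 2 <= C * d) by (apply Rmult_le_compat_l; simpl; nra). lra. }
  assert (Hden : Z0 / 2 <= Zp) by (apply Rabs_le_between in He; unfold rZ in He; lra).
  replace (Mp / Zp - M / Z0 - (m1 / Z0 - M / Z0 * (z1 / Z0))) with
    ((rM * Z0 ^ 2 - M * Z0 * rZ - m1 * Z0 * (z1 + rZ) + M * z1 * (z1 + rZ)) * / (Z0 ^ 2 * Zp))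
    by (unfold rZ, rM; field; lra).
  rewrite Rabs_mult, Rabs_inv, (Rabs_right (Z0 ^ 2 * Zp))
    by (apply Rle_ge, Rmult_le_pos; [apply pow_le|]; lra).
  assert (L : / (Z0 ^ 2 * Zp) <= 2 * / Z0 ^ 3).
  { replace (2 * / Z0 ^ 3) with (/ (Z0 ^ 2 * (Z0 / 2))) by (field; lra).
    apply Rinv_le_contravar; [apply Rmult_lt_0_compat; [apply pow_lt|]; lra|].
    apply Rmult_le_compat_l; [apply pow_le|]; lra. }
  unfold quotient_constant.
  replace (d ^ 2 * (2 * (C * Z0 ^ 2 + Mb * Z0 * C + A * Z0 * (A + C) + Mb * A * (A + C)) / Z0 ^ 3))
    with ((d ^ 2 * (C * Z0 ^ 2 + Mb * Z0 * C + A * Z0 * (A + C) + Mb * A * (A + C))) * (2 * / Z0 ^ 3))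
    by (field; lra).
  apply Rmult_le_compat; [apply Rabs_pos| | |exact L].
  - left; apply Rinv_0_lt_compat, Rmult_lt_0_compat; [apply pow_lt|]; lra.
  - apply quotient_numerator_bound; lra.
Qed.

Lemma quotient_constant_nonneg Z0 Mb A C : 0 < Z0 -> 0 <= Mb -> 0 <= A -> 0 <= C ->
  0 <= quotient_constant Z0 Mb A C.
Proof.
  intros HZ HM HA HC. unfold quotient_constant.
  apply div_nonneg; [|apply pow_lt; lra].
  assert (0 <= Z0 ^ 2) by (apply pow_le; lra).
  apply Rmult_le_pos; [lra|]. repeat apply Rplus_le_le_0_compat; repeat apply Rmult_le_pos; lra.
Qed.

(** Expansion of the density map phi |-> R(phi) around an interior fugacity
    phi0: its Jacobian in the relative coordinates de = psi/phi0 - 1 is the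
    covariance matrix of the one-site marginal. *)

Definition Cov g n phi (i j : nat) : R :=
  expect g n phi (fun k => INR (k i) * INR (k j)) - density g n phi i * density g n phi j.

Lemma pow5_bound y : 0 <= y <= 1 -> (1 + y) ^ 5 - 1 <= 31 * y.
Proof.
  intros H. replace ((1 + y) ^ 5 - 1) with (y * (5 + 10 * y + 10 * y ^ 2 + 5 * y ^ 3 + y ^ 4)) by ring.
  assert (y ^ 2 <= 1) by (simpl; nra). assert (y ^ 3 <= 1) by (simpl; nra).
  assert (y ^ 4 <= 1) by (simpl; nra). nra.
Qed.

Lemma prodR_const_pow m k c : prodR m (fun j => c ^ k j) = c ^ sizek m k.
Proof. induction m; simpl; auto. rewrite IHm, pow_add; ring. Qed.

Section Domain.
Variable n : nat.
Variable g : nat -> (nat -> nat) -> R.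
Hypothesis Hzr : zr_rates g n.

Lemma dom_summable phi : in_fug_domain g n phi -> summable n (weight g n phi).
Proof.
  intros [Hp [e [He H]]]. destruct (H phi) as [s Hs]; [|exists s; auto].
  intros i Hi; split; auto. rewrite Rminus_diag, Rabs_R0; auto.
Qed.

(* Inside the domain, the weights w_phi0 (1 + y)^(5|k|) are summable for some y:
   they are the weights of the fugacity phi0 (1 + y)^5. *)
Lemma dominating_weights phi0 : in_fug_domain g n phi0 ->
  exists y, (0 < y <= 1) /\ summable n (Bw n g phi0 y).
Proof.
  intros [Hp [e [He H]]].
  set (P := 1 + sumR n phi0).
  assert (0 <= sumR n phi0) by (apply sumR_nonneg; intros; left; auto).
  assert (HP : 1 <= P) by (unfold P; lra).
  set (y := Rmin 1 (e / (32 * P))).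
  assert (ey : 0 < e / (32 * P)) by (apply Rdiv_lt_0_compat; lra).
  assert (Hy : 0 < y <= 1) by (unfold y; split; [apply Rmin_glb_lt; lra|apply Rmin_l]).
  assert (Hy5 : 1 <= (1 + y) ^ 5) by (apply pow_ge1; lra).
  exists y; split; auto.
  destruct (H (fun j => phi0 j * (1 + ((1 + y) ^ 5 - 1)))) as [s Hs].
  - intros i Hi. split; [apply Rmult_lt_0_compat; auto; lra|].
    replace (phi0 i * (1 + ((1 + y) ^ 5 - 1)) - phi0 i) with (phi0 i * ((1 + y) ^ 5 - 1)) by ring.
    rewrite Rabs_right by (apply Rle_ge, Rmult_le_pos; [left; auto|lra]).
    assert (phi0 i <= P) by (assert (phi0 i <= sumR n phi0)
      by (apply sumR_ge_term; auto; intros; left; auto); unfold P; lra).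
    assert ((1 + y) ^ 5 - 1 <= 31 * y) by (apply pow5_bound; lra).
    assert (y <= e / (32 * P)) by apply Rmin_r.
    assert (phi0 i * ((1 + y) ^ 5 - 1) <= P * (31 * y)) by (apply Rmult_le_compat; try lra; left; auto).
    assert (Hq : P * (31 * y) <= P * (31 * (e / (32 * P)))) by (apply Rmult_le_compat_l; lra).
    replace (P * (31 * (e / (32 * P)))) with (31 / 32 * e) in Hq by (field; lra). lra.
  - exists s. eapply HasSum_ext; [|exact Hs]. intros k Hk. unfold Bw.
    rewrite (weight_scale n g phi0 _ (fun _ => (1 + y) ^ 5 - 1) k) by (intros; reflexivity).
    f_equal. replace (1 + ((1 + y) ^ 5 - 1)) with ((1 + y) ^ 5) by ring.
    rewrite prodR_const_pow, pow_mult. auto.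
Qed.

Lemma constant_observable k : cfg n k -> 0 <= (fun _ : nat -> nat => 1) k <= 1 + INR (sizek n k).
Proof. intros; simpl; assert (0 <= INR (sizek n k)) by apply pos_INR; lra. Qed.

Lemma species_observable i : (i < n)%nat -> forall k, cfg n k ->
  0 <= (fun k => INR (k i)) k <= 1 + INR (sizek n k).
Proof.
  intros Hi k Hk; simpl; split; [apply pos_INR|].
  assert (INR (k i) <= INR (sizek n k)) by (apply species_le_sizek; auto). lra.
Qed.

Lemma dom_summable_species phi j : in_fug_domain g n phi -> (j < n)%nat ->
  summable n (fun k => INR (k j) * weight g n phi k).
Proof.
  intros Hd Hj. destruct (dominating_weights phi Hd) as [y [Hy HB]]. destruct Hd as [Hp _].
  assert (S := F_moment_summable n g Hzr phi Hp y Hy HB _ constant_observable j Hj).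
  apply summable_le with (fun k => 1 * INR (k j) * weight g n phi k); auto.
  - intros k _. apply Rmult_le_pos; [apply pos_INR|left; apply weight_pos; auto].
  - intros k Hk; right; ring.
Qed.

End Domain.

Section DensityExpansion.
Variable n : nat.
Variable g : nat -> (nat -> nat) -> R.
Hypothesis Hzr : zr_rates g n.
Variable phi0 : nat -> R.
Hypothesis Hp : forall j, (j < n)%nat -> 0 < phi0 j.
Hypothesis S0 : summable n (weight g n phi0).
Variable y : R.
Hypothesis Hy : 0 < y <= 1.
Hypothesis HB : summable n (Bw n g phi0 y).

Definition moment_const := 2 / y ^ 2 * tsum n (Bw n g phi0 y).
Definition remainder_const := 2 / y ^ 3 * tsum n (Bw n g phi0 y).
Definition linear_const := INR n * moment_const.

Lemma expansion_consts_nonneg : 0 <= moment_const /\ 0 <= remainder_const /\ 0 <= linear_const.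
Proof.
  assert (0 <= tsum n (Bw n g phi0 y)) by (apply tsum_nonneg; auto; apply Bw_nneg; auto).
  unfold linear_const, moment_const, remainder_const.
  assert (0 <= 2 / y ^ 2 * tsum n (Bw n g phi0 y)) by (apply Rmult_le_pos; auto using inv_pow_nonneg).
  repeat split; [auto|apply Rmult_le_pos; auto using inv_pow_nonneg|apply Rmult_le_pos; auto using pos_INR].
Qed.

Lemma moment_bounds F : (forall k, cfg n k -> 0 <= F k <= 1 + INR (sizek n k)) -> forall j, (j < n)%nat ->
  0 <= tsum n (fun k => F k * INR (k j) * weight g n phi0 k) <= moment_const.
Proof.
  intros HF j Hj. split.
  - apply tsum_nonneg; [apply F_moment_nneg|apply (F_moment_summable n g Hzr phi0 Hp y Hy HB)]; auto.
  - unfold moment_const. rewrite <- tsum_scal; auto using inv_pow_nonneg.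
    apply tsum_le; [apply F_moment_nneg; auto| |apply summable_scal; auto using inv_pow_nonneg].
    intros k Hk; apply (F_moment_bound n g Hzr phi0 Hp y Hy F HF); auto.
Qed.

Lemma first_order_bound F : (forall k, cfg n k -> 0 <= F k <= 1 + INR (sizek n k)) ->
  forall de d, (forall j, (j < n)%nat -> Rabs (de j) <= d) ->
  Rabs (sumR n (fun j => de j * tsum n (fun k => F k * INR (k j) * weight g n phi0 k))) <= linear_const * d.
Proof.
  intros HF de d Hde. unfold linear_const.
  replace (INR n * moment_const * d) with (INR n * (d * moment_const)) by ring.
  apply sumR_abs_bound. intros j Hj. rewrite Rabs_mult.
  destruct (moment_bounds F HF j Hj). rewrite (Rabs_right (tsum _ _)) by lra.
  apply Rmult_le_compat; auto using Rabs_pos.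
Qed.

Lemma covariance_linear_term i de :
  let Z0 := Zpart g n phi0 in
  let M := tsum n (fun k => INR (k i) * weight g n phi0 k) in
  0 < Z0 ->
  sumR n (fun j => de j * tsum n (fun k => INR (k i) * INR (k j) * weight g n phi0 k)) / Z0
  - M / Z0 * (sumR n (fun j => de j * tsum n (fun k => 1 * INR (k j) * weight g n phi0 k)) / Z0)
  = sumR n (fun j => Cov g n phi0 i j * de j).
Proof.
  intros Z0 M HZ.
  transitivity (sumR n (fun j => / Z0 * (de j * tsum n (fun k => INR (k i) * INR (k j) * weight g n phi0 k)))
    - sumR n (fun j => M / Z0 * / Z0 * (de j * tsum n (fun k => 1 * INR (k j) * weight g n phi0 k)))).
  { rewrite !sumR_scal. field. lra. }
  rewrite <- sumR_minus. apply sumR_ext. intros j Hj.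
  rewrite (tsum_ext n (fun k => 1 * INR (k j) * weight g n phi0 k) (fun k => INR (k j) * weight g n phi0 k))
    by (intros; ring).
  unfold Cov, density, expect. fold Z0 M. field. lra.
Qed.

Definition expansion_radius := Rmin y (Zpart g n phi0 / (2 * (linear_const + remainder_const) + 1)).
Definition expansion_const := quotient_constant (Zpart g n phi0) moment_const linear_const remainder_const.

Lemma density_expansion_at psi de d :
  (forall j, (j < n)%nat -> psi j = phi0 j * (1 + de j)) ->
  (forall j, (j < n)%nat -> Rabs (de j) <= d) -> 0 <= d <= expansion_radius ->
  forall i, (i < n)%nat ->
  Rabs (density g n psi i - density g n phi0 i - sumR n (fun j => Cov g n phi0 i j * de j))
  <= expansion_const * d ^ 2.
Proof.
  intros Hpsi Hde Hd i Hi.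
  assert (HZ : 0 < Zpart g n phi0) by (apply Z_pos; auto).
  destruct expansion_consts_nonneg as [HM [HC HA]].
  assert (dy : d <= y) by (eapply Rle_trans; [apply Hd|apply Rmin_l]).
  assert (Hd1 : d <= Zpart g n phi0 / (2 * (linear_const + remainder_const) + 1))
    by (eapply Rle_trans; [apply Hd|apply Rmin_r]).
  assert (Hsmall : (linear_const + remainder_const) * d <= Zpart g n phi0 / 2).
  { apply Rle_trans
      with ((linear_const + remainder_const) * (Zpart g n phi0 / (2 * (linear_const + remainder_const) + 1))).
    - apply Rmult_le_compat_l; lra.
    - apply Rmult_le_reg_r with (2 * (linear_const + remainder_const) + 1); [lra|].
      field_simplify; [nra|lra]. }
  assert (Hrem : d ^ 2 * (2 / y ^ 3) * tsum n (Bw n g phi0 y) = remainder_const * d ^ 2)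
    by (unfold remainder_const; ring).
  destruct (expansion n g Hzr phi0 Hp y Hy HB _ (constant_observable n) psi de d Hpsi Hde
    (conj (proj1 Hd) dy))
    as [_ EZ].
  destruct (expansion n g Hzr phi0 Hp y Hy HB _ (species_observable n i Hi) psi de d Hpsi Hde
    (conj (proj1 Hd) dy))
    as [_ EM].
  rewrite Hrem in EZ, EM.
  rewrite !(tsum_ext n (fun k => 1 * weight g n _ k) (weight g n _)) in EZ by (intros; ring).
  rewrite <- (covariance_linear_term i de HZ). unfold density, expect.
  unfold expansion_const. rewrite (Rmult_comm (quotient_constant _ _ _ _)).
  apply quotient_expansion; auto; try lra.
  - assert (E := moment_bounds _ (constant_observable n) i Hi).
    rewrite (tsum_ext n _ (fun k => INR (k i) * weight g n phi0 k)) in E by (intros; ring). exact E.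
  - apply (first_order_bound _ (constant_observable n)); auto.
  - apply (first_order_bound _ (species_observable n i Hi)); auto.
Qed.

End DensityExpansion.

Lemma density_expansion n g phi0 : zr_rates g n -> in_fug_domain g n phi0 ->
  exists K d1, 0 < d1 /\ 0 <= K /\ forall psi de d,
  (forall j, (j < n)%nat -> psi j = phi0 j * (1 + de j)) ->
  (forall j, (j < n)%nat -> Rabs (de j) <= d) -> 0 <= d <= d1 ->
  forall i, (i < n)%nat ->
  Rabs (density g n psi i - density g n phi0 i - sumR n (fun j => Cov g n phi0 i j * de j)) <= K * d ^ 2.
Proof.
  intros Hzr Hdom. destruct (dominating_weights n g phi0 Hdom) as [y [Hy HB]].
  assert (S0 := dom_summable n g phi0 Hdom). destruct Hdom as [Hp _].
  assert (HZ : 0 < Zpart g n phi0) by (apply Z_pos; auto).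
  destruct (expansion_consts_nonneg n g Hzr phi0 Hp y Hy HB) as [HM [HC HA]].
  exists (expansion_const n g phi0 y), (expansion_radius n g phi0 y). split; [|split].
  - apply Rmin_glb_lt; [lra|apply Rdiv_lt_0_compat; lra].
  - apply quotient_constant_nonneg; auto.
  - intros psi de d Hpsi Hde Hd. apply density_expansion_at; auto.
Qed.

(** The variances Cov_ii are positive: the one-site marginal charges both the
    empty configuration and e_i. *)

Section Variance.
Variable n : nat.
Variable g : nat -> (nat -> nat) -> R.
Hypothesis Hzr : zr_rates g n.
Variable phi0 : nat -> R.
Hypothesis Hdom : in_fug_domain g n phi0.
Variable i : nat.
Hypothesis Hi : (i < n)%nat.

Definition centred_moment (k : nat -> nat) := (INR (k i) - density g n phi0 i) ^ 2 * weight g n phi0 k.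

Lemma second_moment_summable : summable n (fun k => INR (k i) * INR (k i) * weight g n phi0 k).
Proof.
  destruct (dominating_weights n g phi0 Hdom) as [y [Hy HB]].
  exact (F_moment_summable n g Hzr phi0 (proj1 Hdom) y Hy HB _ (species_observable n i Hi) i Hi).
Qed.

Lemma centred_moment_sum :
  summable n centred_moment /\
  tsum n centred_moment
  = tsum n (fun k => INR (k i) * INR (k i) * weight g n phi0 k) - density g n phi0 i ^ 2 * Zpart g n phi0.
Proof.
  set (a := density g n phi0 i). assert (Hp := proj1 Hdom).
  assert (S0 := dom_summable n g phi0 Hdom). assert (SM := dom_summable_species n g Hzr phi0 i Hdom Hi).
  assert (HZ : 0 < Zpart g n phi0) by (apply Z_pos; auto).
  assert (Pw : nneg n (weight g n phi0)) by (intros k _; left; apply weight_pos; auto).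
  assert (PM : nneg n (fun k => INR (k i) * weight g n phi0 k))
    by (intros k Hk; apply Rmult_le_pos; [apply pos_INR|apply Pw; auto]).
  assert (Ma : tsum n (fun k => INR (k i) * weight g n phi0 k) = a * Zpart g n phi0)
    by (unfold a, density, expect; field; lra).
  assert (a0 : 0 <= a).
  { unfold a, density, expect. apply div_nonneg; auto. apply tsum_nonneg; auto. }
  assert (PV : nneg n centred_moment) by (intros k Hk; apply Rmult_le_pos; [apply pow2_ge_0|apply Pw; auto]).
  assert (PQ : nneg n (fun k => INR (k i) * INR (k i) * weight g n phi0 k)).
  { intros k Hk. assert (0 <= INR (k i)) by apply pos_INR. apply Rmult_le_pos; [nra|apply Pw; auto]. }
  (* (k_i - a)^2 w = k_i^2 w + (a^2 w - 2 a k_i w), with zero error *)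
  destruct (tsum_linear_approx n 1 centred_moment (fun k => INR (k i) * INR (k i) * weight g n phi0 k)
    (fun _ => 0) (fun _ => 1) (fun _ k => a ^ 2 * weight g n phi0 k)
    (fun _ k => 2 * a * (INR (k i) * weight g n phi0 k))) as [SV E];
    auto using second_moment_summable.
  - intros k _; lra.
  - exists 0; apply HasSum_zero.
  - intros j _. split; [intros k Hk; apply Rmult_le_pos; [apply pow2_ge_0|apply Pw; auto]|].
    split; [apply summable_scal; auto; apply pow2_ge_0|].
    split; [intros k Hk; apply Rmult_le_pos; [lra|apply PM; auto]|].
    apply summable_scal; auto; lra.
  - intros k _. unfold centred_moment. simpl. fold a.
    replace (_ - _ - _) with 0 by ring. rewrite Rabs_R0; lra.
  - split; auto. rewrite (tsum_eq n _ 0 (HasSum_zero n)) in E. simpl in E.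
    rewrite tsum_scal, tsum_scal, Ma in E; auto; try lra; try apply pow2_ge_0.
    apply Rabs_le_between in E. unfold Zpart in *. lra.
Qed.

(* The centred moment is positive: both 0 and e_i have positive weight and
   cannot both sit at the mean. *)
Lemma centred_moment_pos : 0 < tsum n centred_moment.
Proof.
  assert (Hp := proj1 Hdom). set (a := density g n phi0 i).
  assert (Pw : forall k, 0 < weight g n phi0 k) by (intros; apply weight_pos; auto).
  apply Rlt_le_trans with (lsum centred_moment (zk :: ek i :: nil)).
  - simpl. unfold centred_moment. fold a. rewrite ek_same. unfold zk at 1. simpl INR.
    assert (w1 := Pw zk). assert (w2 := Pw (ek i)).
    destruct (Req_dec a 0) as [->|Ha]; [nra|].
    assert (0 < (0 - a) ^ 2) by (replace ((0 - a) ^ 2) with (a * a) by ring; apply Rsqr_pos_lt; auto).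
    assert (0 <= (1 - a) ^ 2) by apply pow2_ge_0.
    assert (0 < (0 - a) ^ 2 * weight g n phi0 zk) by (apply Rmult_lt_0_compat; auto).
    assert (0 <= (1 - a) ^ 2 * weight g n phi0 (ek i)) by (apply Rmult_le_pos; lra). lra.
  - apply lsum_le_tsum; [|apply centred_moment_sum| |].
    + intros k _. apply Rmult_le_pos; [apply pow2_ge_0|left; auto].
    + constructor; [|constructor; [|constructor]].
      * intros [H|[]]. assert (E : zk i = ek i i) by (rewrite H; auto). rewrite ek_same in E. discriminate.
      * intros [].
    + constructor; [apply cfg_zk|constructor; [apply cfg_ek; auto|constructor]].
Qed.

Lemma covariance_diag_pos : 0 < Cov g n phi0 i i.
Proof.
  assert (HZ : 0 < Zpart g n phi0) by (apply Z_pos; [auto|apply Hdom|apply dom_summable; auto]).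
  replace (Cov g n phi0 i i) with (tsum n centred_moment / Zpart g n phi0).
  - apply Rdiv_lt_0_compat; auto using centred_moment_pos.
  - rewrite (proj2 centred_moment_sum). unfold Cov, expect at 1. unfold Zpart. field. unfold Zpart in HZ. lra.
Qed.

End Variance.

(** Continuity of the inverse of the density map, via a relative-entropy
    argument: with L = log(p/q) for the marginals p = nu_psi, q = nu_phi0,
    sum_k (p_k - q_k) L_k = sum_j log(psi_j/phi0_j) (R(psi)_j - R(phi0)_j),
    and each term (p_k - q_k) L_k >= q_k L_k^2/(1 + |L_k|). *)

Lemma exp_one_minus x : (1 - x) * exp x <= 1.
Proof.
  assert (H := exp_ineq1_le (- x)). rewrite exp_Ropp in H. assert (P := exp_pos x).
  apply Rmult_le_reg_r with (/ exp x); [apply Rinv_0_lt_compat; auto|].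
  rewrite Rmult_assoc, Rinv_r; lra.
Qed.

(* (e^L - 1) L >= L^2/(1 + |L|): the entropy terms are nonnegative and coercive. *)
Lemma exp_L_ineq L : L ^ 2 / (1 + Rabs L) <= (exp L - 1) * L.
Proof.
  assert (H1 := exp_ineq1_le L). assert (H2 := exp_one_minus L).
  destruct (Rle_dec 0 L).
  - rewrite Rabs_right by lra. apply Rmult_le_reg_r with (1 + L); [lra|].
    unfold Rdiv. rewrite Rmult_assoc, Rinv_l; [nra|lra].
  - rewrite Rabs_left by lra.
    apply Rmult_le_reg_r with (1 - L); [lra|]. replace (1 + - L) with (1 - L) by ring.
    unfold Rdiv. rewrite Rmult_assoc, Rinv_l; [nra|lra].
Qed.

Lemma exp_small D : Rabs D <= 1 / 2 -> Rabs (exp D - 1) <= 2 * Rabs D.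
Proof.
  intros H. assert (H1 := exp_ineq1_le D). assert (H2 := exp_one_minus D).
  assert (P := exp_pos D). apply Rabs_le_between in H.
  destruct (Rle_dec 0 D).
  - rewrite (Rabs_right D), Rabs_right by lra. nra.
  - assert (exp D < 1) by (rewrite <- exp_0; apply exp_increasing; lra).
    rewrite (Rabs_left D), Rabs_left1 by lra. lra.
Qed.

Lemma h_mono v t : 0 <= v <= t -> v ^ 2 / (1 + v) <= t ^ 2 / (1 + t).
Proof.
  intros H. apply Rmult_le_reg_r with ((1 + v) * (1 + t)); [nra|].
  replace (v ^ 2 / (1 + v) * ((1 + v) * (1 + t))) with (v ^ 2 * (1 + t)) by (field; lra).
  replace (t ^ 2 / (1 + t) * ((1 + v) * (1 + t))) with (t ^ 2 * (1 + v)) by (field; lra).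
  assert (v * v <= t * t) by nra. assert (0 <= v * t * (t - v)) by (apply Rmult_le_pos; nra).
  simpl. nra.
Qed.

Lemma small_of_h_bound q s V : 0 < q -> 0 <= s -> s <= q / 4 -> 0 <= V ->
  q * (V ^ 2 / (1 + V)) <= s * V -> V <= 2 * s / q.
Proof.
  intros Hq Hs Hsq HV H.
  destruct (Req_dec V 0) as [->|HV0]; [apply div_nonneg; lra|].
  assert (I2 : q * V <= s * (1 + V)).
  { apply Rmult_le_reg_r with (V / (1 + V)); [apply Rdiv_lt_0_compat; lra|].
    replace (q * V * (V / (1 + V))) with (q * (V ^ 2 / (1 + V))) by (field; lra).
    replace (s * (1 + V) * (V / (1 + V))) with (s * V) by (field; lra). auto. }
  assert (V <= 1 / 3) by nra.
  apply Rmult_le_reg_r with q; auto. unfold Rdiv. rewrite Rmult_assoc, Rinv_l by lra. nra.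
Qed.

Definition marginal g n phi k := weight g n phi k / Zpart g n phi.

Section RelativeEntropy.
Variable n : nat.
Variable g : nat -> (nat -> nat) -> R.
Hypothesis Hzr : zr_rates g n.
Variables phi0 psi : nat -> R.
Hypothesis Hd0 : in_fug_domain g n phi0.
Hypothesis Hd1 : in_fug_domain g n psi.

Definition log_ratio j := ln (psi j / phi0 j).
Definition log_Z_ratio := ln (Zpart g n psi / Zpart g n phi0).
Definition log_likelihood k := sumR n (fun j => INR (k j) * log_ratio j) - log_Z_ratio.
Definition entropy_term k := (marginal g n psi k - marginal g n phi0 k) * log_likelihood k.

Lemma marginal_pos phi k : in_fug_domain g n phi -> 0 < marginal g n phi k.
Proof.
  intros Hd. unfold marginal. apply Rdiv_lt_0_compat; [apply weight_pos; auto; apply Hd|].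
  apply Z_pos; auto; [apply Hd|apply dom_summable; auto].
Qed.

Lemma marginal_ratio k : marginal g n psi k = marginal g n phi0 k * exp (log_likelihood k).
Proof.
  assert (Hp0 := proj1 Hd0). assert (Hp1 := proj1 Hd1).
  assert (HZ0 : 0 < Zpart g n phi0) by (apply Z_pos; auto; apply dom_summable; auto).
  assert (HZ1 : 0 < Zpart g n psi) by (apply Z_pos; auto; apply dom_summable; auto).
  unfold marginal, log_likelihood. rewrite (weight_scale n g phi0 psi (fun j => psi j / phi0 j - 1) k).
  2:{ intros j Hj. assert (0 < phi0 j) by (apply Hp0; auto). field. lra. }
  rewrite (prodR_ext n _ (fun j => exp (log_ratio j) ^ k j)).
  2:{ intros j Hj. unfold log_ratio. rewrite exp_ln; [f_equal; ring|].
      apply Rdiv_lt_0_compat; [apply Hp1|apply Hp0]; auto. }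
  rewrite prodR_exp. unfold Rminus. rewrite exp_plus, exp_Ropp. unfold log_Z_ratio.
  rewrite exp_ln by (apply Rdiv_lt_0_compat; auto). field. split; lra.
Qed.

Lemma entropy_term_lower k :
  marginal g n phi0 k * (log_likelihood k ^ 2 / (1 + Rabs (log_likelihood k))) <= entropy_term k.
Proof.
  unfold entropy_term. rewrite marginal_ratio.
  replace ((marginal g n phi0 k * exp (log_likelihood k) - marginal g n phi0 k) * log_likelihood k)
    with (marginal g n phi0 k * ((exp (log_likelihood k) - 1) * log_likelihood k)) by ring.
  apply Rmult_le_compat_l; [left; apply marginal_pos; auto|apply exp_L_ineq].
Qed.

Lemma entropy_term_nneg : nneg n entropy_term.
Proof.
  intros k _. eapply Rle_trans; [|apply entropy_term_lower].
  apply Rmult_le_pos; [left; apply marginal_pos; auto|].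
  apply div_nonneg; [apply pow2_ge_0|].
  assert (0 <= Rabs (log_likelihood k)) by apply Rabs_pos. lra.
Qed.

(* L is a linear combination of the observables k_0, ..., k_(n-1) and 1 *)
Definition obs (j : nat) (k : nat -> nat) : R := if Nat.ltb j n then INR (k j) else 1.
Definition coef (j : nat) : R := if Nat.ltb j n then log_ratio j else - log_Z_ratio.

Lemma log_likelihood_obs k : log_likelihood k = sumR (S n) (fun j => coef j * obs j k).
Proof.
  simpl. unfold coef at 2, obs at 2. rewrite Nat.ltb_irrefl. unfold log_likelihood.
  rewrite (sumR_ext n (fun j => coef j * obs j k) (fun j => INR (k j) * log_ratio j)); [ring|].
  intros j Hj. unfold coef, obs. rewrite (proj2 (Nat.ltb_lt j n) Hj). ring.
Qed.

Lemma obs_moment phi j : in_fug_domain g n phi -> (j < S n)%nat ->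
  nneg n (fun k => obs j k * marginal g n phi k) /\ summable n (fun k => obs j k * marginal g n phi k) /\
  tsum n (fun k => obs j k * marginal g n phi k) = if Nat.ltb j n then density g n phi j else 1.
Proof.
  intros Hd Hj. assert (HZ : 0 < Zpart g n phi) by (apply Z_pos; auto; [apply Hd|apply dom_summable; auto]).
  assert (Hobs : forall k, 0 <= obs j k)
    by (intros k; unfold obs; destruct (Nat.ltb j n); [apply pos_INR|lra]).
  assert (E : forall k, obs j k * marginal g n phi k = / Zpart g n phi * (obs j k * weight g n phi k))
    by (intros; unfold marginal, Rdiv; ring).
  assert (S : summable n (fun k => obs j k * weight g n phi k)).
  { unfold obs. destruct (Nat.ltb_spec j n); [apply dom_summable_species; auto|].
    apply (summable_le n _ (weight g n phi)); [intros k _| |apply dom_summable; auto];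
      [rewrite Rmult_1_l; left; apply weight_pos; auto; apply Hd|intros; lra]. }
  assert (Sw : summable n (fun k => / Zpart g n phi * (obs j k * weight g n phi k)))
    by (apply summable_scal; auto; left; apply Rinv_0_lt_compat; auto).
  assert (P : nneg n (fun k => obs j k * marginal g n phi k))
    by (intros k _; apply Rmult_le_pos; [auto|left; apply marginal_pos; auto]).
  split; [exact P|split].
  - apply (summable_le n _ (fun k => / Zpart g n phi * (obs j k * weight g n phi k))); auto.
    intros k _; rewrite E; lra.
  - rewrite (tsum_ext n _ _ (fun k _ => E k)), tsum_scal by (auto; left; apply Rinv_0_lt_compat; auto).
    unfold obs, density, expect. destruct (Nat.ltb j n); unfold Rdiv; [ring|].
    rewrite (tsum_ext n _ (weight g n phi)) by (intros; ring). unfold Zpart in *. field. lra.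
Qed.

Lemma entropy_identity :
  summable n entropy_term /\
  tsum n entropy_term = sumR n (fun j => log_ratio j * (density g n psi j - density g n phi0 j)).
Proof.
  destruct (tsum_linear_approx n (S n) entropy_term (fun _ => 0) (fun _ => 0) coef
    (fun j k => obs j k * marginal g n psi k) (fun j k => obs j k * marginal g n phi0 k)) as [ST E];
    auto using entropy_term_nneg.
  - intros k _; lra.
  - intros k _; lra.
  - exists 0; apply HasSum_zero.
  - exists 0; apply HasSum_zero.
  - intros j Hj. destruct (obs_moment psi j Hd1 Hj) as [P1 [S1 _]].
    destruct (obs_moment phi0 j Hd0 Hj) as [P2 [S2 _]]. auto.
  - intros k _. unfold entropy_term. rewrite log_likelihood_obs.
    replace (_ - _ - _) with 0. rewrite Rabs_R0; lra.
    rewrite (sumR_ext (S n) (fun j => coef j * (obs j k * marginal g n psi k - obs j k * marginal g n phi0 k))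
      (fun j => (marginal g n psi k - marginal g n phi0 k) * (coef j * obs j k))) by (intros; ring).
    rewrite sumR_scal. ring.
  - split; [exact ST|]. rewrite (tsum_eq n _ 0 (HasSum_zero n)), Rminus_0_r in E.
    apply Rabs_le_between in E.
    assert (Et : sumR (S n) (fun j => coef j * (tsum n (fun k => obs j k * marginal g n psi k)
                                               - tsum n (fun k => obs j k * marginal g n phi0 k)))
                 = sumR n (fun j => log_ratio j * (density g n psi j - density g n phi0 j))).
    { simpl. rewrite (proj2 (proj2 (obs_moment psi n Hd1 (Nat.lt_succ_diag_r n)))).
      rewrite (proj2 (proj2 (obs_moment phi0 n Hd0 (Nat.lt_succ_diag_r n)))).
      unfold coef at 2. rewrite Nat.ltb_irrefl, Rminus_diag, Rmult_0_r, Rplus_0_r.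
      apply sumR_ext. intros j Hj.
      rewrite (proj2 (proj2 (obs_moment psi j Hd1 ltac:(lia)))).
      rewrite (proj2 (proj2 (obs_moment phi0 j Hd0 ltac:(lia)))).
      unfold coef. rewrite (proj2 (Nat.ltb_lt j n) Hj). auto. }
    lra.
Qed.

Lemma entropy_partial_sum l0 : NoDup l0 -> Forall (cfg n) l0 ->
  lsum entropy_term l0 <= sumR n (fun j => log_ratio j * (density g n psi j - density g n phi0 j)).
Proof.
  intros N F. destruct entropy_identity as [S E]. rewrite <- E.
  apply lsum_le_tsum; auto using entropy_term_nneg.
Qed.

End RelativeEntropy.

Definition basic_cfgs n := zk :: map ek (seq 0 n).

Lemma basic_cfgs_NoDup n : NoDup (basic_cfgs n).
Proof.
  constructor.
  - intros H. apply in_map_iff in H. destruct H as [i [E _]].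
    assert (H : ek i i = zk i) by (rewrite E; auto). rewrite ek_same in H. discriminate.
  - apply NoDup_map_NoDup_ForallPairs; [|apply seq_NoDup]. intros x y _ _ E.
    assert (H : ek x x = ek y x) by (rewrite E; auto). rewrite ek_same in H.
    destruct (Nat.eq_dec x y); auto. rewrite ek_other in H; auto. discriminate.
Qed.

Lemma basic_cfgs_cfg n : Forall (cfg n) (basic_cfgs n).
Proof.
  constructor; [apply cfg_zk|]. apply Forall_forall. intros x Hx. apply in_map_iff in Hx.
  destruct Hx as [i [<- Hi]]. apply in_seq in Hi. apply cfg_ek; lia.
Qed.

Lemma lsum_basic_cfgs (f : (nat -> nat) -> R) n : lsum f (basic_cfgs n) = f zk + sumR n (fun i => f (ek i)).
Proof.
  unfold basic_cfgs. simpl. f_equal. induction n; [reflexivity|].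
  rewrite seq_S, map_app, lsum_app, IHn. simpl. ring.
Qed.

Section Continuity.
Variable n : nat.
Variable g : nat -> (nat -> nat) -> R.
Hypothesis Hzr : zr_rates g n.
Variable phi0 : nat -> R.
Hypothesis Hd0 : in_fug_domain g n phi0.

Definition qmin := Rmin (marginal g n phi0 zk) (minR n (fun i => marginal g n phi0 (ek i))).
Definition basic_count := INR n + 1.

Lemma qmin_pos : 0 < qmin.
Proof. apply Rmin_glb_lt; [|apply minR_pos; intros]; apply marginal_pos; auto. Qed.

Lemma basic_count_ge1 : 1 <= basic_count.
Proof. unfold basic_count. assert (0 <= INR n) by apply pos_INR. lra. Qed.

Variable psi : nat -> R.
Hypothesis Hd1 : in_fug_domain g n psi.

Local Notation lr := (log_ratio phi0 psi).
Local Notation lz := (log_Z_ratio n g phi0 psi).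
Local Notation llk := (log_likelihood n g phi0 psi).
Local Notation ent := (entropy_term n g phi0 psi).

Definition spread := Rabs lz + sumR n (fun i => Rabs (lr i - lz)).

Lemma log_ratio_le_spread j : (j < n)%nat -> Rabs (lr j) <= spread.
Proof.
  intros Hj. unfold spread.
  assert (Rabs (lr j - lz) <= sumR n (fun i => Rabs (lr i - lz)))
    by (apply (sumR_ge_term n (fun i => Rabs (lr i - lz))); auto; intros; apply Rabs_pos).
  replace (lr j) with ((lr j - lz) + lz) by ring.
  eapply Rle_trans; [apply Rabs_triang|]. lra.
Qed.

Lemma spread_nonneg : 0 <= spread.
Proof.
  unfold spread. assert (0 <= sumR n (fun i => Rabs (lr i - lz)))
    by (apply sumR_nonneg; intros; apply Rabs_pos).
  assert (0 <= Rabs lz) by apply Rabs_pos. lra.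
Qed.

Lemma entropy_term_basic k t : 0 <= t -> t <= Rabs (llk k) ->
  (k = zk \/ exists i, (i < n)%nat /\ k = ek i) -> qmin * (t ^ 2 / (1 + t)) <= ent k.
Proof.
  intros Ht Htk Hk. eapply Rle_trans; [|apply entropy_term_lower; auto].
  rewrite <- (pow2_abs (llk k)).
  apply Rmult_le_compat.
  - left; apply qmin_pos.
  - apply div_nonneg; [apply pow2_ge_0|lra].
  - destruct Hk as [->|[i [Hi ->]]]; [apply Rmin_l|].
    eapply Rle_trans; [apply Rmin_r|apply (minR_le n (fun i => marginal g n phi0 (ek i)) i Hi)].
  - apply h_mono; lra.
Qed.

(* Lower bound: one of L(0) = -log_Z_ratio, L(e_i) = log_ratio_i - log_Z_ratio
   is at least spread/basic_count in absolute value (pigeonhole). *)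
Lemma entropy_lower :
  qmin * ((spread / basic_count) ^ 2 / (1 + spread / basic_count)) <= lsum ent (basic_cfgs n).
Proof.
  assert (HN := basic_count_ge1). assert (HU := spread_nonneg).
  set (V := spread / basic_count). assert (HV : 0 <= V) by (apply div_nonneg; lra).
  set (u := fun i => Rabs (lr i - lz)).
  assert (PT : forall i, (i < n)%nat -> 0 <= ent (ek i))
    by (intros; apply entropy_term_nneg; auto; apply cfg_ek; auto).
  assert (PT0 : 0 <= ent zk) by (apply entropy_term_nneg; auto; apply cfg_zk).
  rewrite lsum_basic_cfgs.
  assert (PS : 0 <= sumR n (fun i => ent (ek i))) by (apply sumR_nonneg; auto).
  destruct (Rle_dec V (Rabs lz)) as [Hv|Hv].
  - assert (qmin * (V ^ 2 / (1 + V)) <= ent zk); [|lra].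
    apply entropy_term_basic; auto. unfold log_likelihood.
    rewrite (sumR_ext n _ (fun _ => 0)), sumR_const by (intros; unfold zk; simpl; ring).
    rewrite Rmult_0_r, Rminus_0_l, Rabs_Ropp. auto.
  - assert (HNV : spread = basic_count * V) by (unfold V; field; lra).
    assert (INR n * V < sumR n u) by (unfold spread, basic_count in HNV; fold u in HNV; lra).
    destruct (sumR_exists_large n u V H) as [i [Hi Hui]].
    assert (ent (ek i) <= sumR n (fun i => ent (ek i)))
      by (apply (sumR_ge_term n (fun i => ent (ek i))); auto).
    assert (qmin * (V ^ 2 / (1 + V)) <= ent (ek i)); [|lra].
    apply entropy_term_basic; eauto. unfold log_likelihood. rewrite (sumR_single n _ i Hi).
    + rewrite ek_same. unfold u in Hui. simpl INR. rewrite Rmult_1_l. lra.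
    + intros x Hx Hne. rewrite ek_other; auto. simpl; ring.
Qed.

Lemma entropy_upper sig : 0 <= sig ->
  (forall j, (j < n)%nat -> Rabs (density g n psi j - density g n phi0 j) <= sig) ->
  lsum ent (basic_cfgs n) <= sig * basic_count * spread.
Proof.
  intros Hsig Hclose.
  eapply Rle_trans; [apply entropy_partial_sum; auto using basic_cfgs_NoDup, basic_cfgs_cfg|].
  apply Rle_trans with (sumR n (fun _ => spread * sig)).
  - apply sumR_le. intros j Hj. eapply Rle_trans; [apply Rle_abs|]. rewrite Rabs_mult.
    apply Rmult_le_compat; auto using Rabs_pos, log_ratio_le_spread.
  - rewrite sumR_const. unfold basic_count.
    assert (0 <= spread * sig) by (apply Rmult_le_pos; auto using spread_nonneg).
    nra.
Qed.

Lemma log_ratio_small sig : 0 <= sig -> sig <= qmin / (4 * basic_count ^ 2) ->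
  (forall j, (j < n)%nat -> Rabs (density g n psi j - density g n phi0 j) <= sig) ->
  forall j, (j < n)%nat -> Rabs (lr j) <= 2 * sig * basic_count ^ 3 / qmin.
Proof.
  intros Hsig Hsmall Hclose j Hj.
  assert (HN := basic_count_ge1). assert (Hq := qmin_pos). assert (HU := spread_nonneg).
  set (V := spread / basic_count).
  assert (HNV : spread = basic_count * V) by (unfold V; field; lra).
  assert (HV : 0 <= V) by (apply div_nonneg; lra).
  assert (Hs4 : sig * basic_count ^ 2 <= qmin / 4).
  { apply Rle_trans with (qmin / (4 * basic_count ^ 2) * basic_count ^ 2).
    - apply Rmult_le_compat_r; [apply pow_le|]; lra.
    - right; field; lra. }
  assert (HVb : V <= 2 * (sig * basic_count ^ 2) / qmin).
  { apply small_of_h_bound; auto.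
    - apply Rmult_le_pos; [lra|apply pow_le; lra].
    - replace (sig * basic_count ^ 2 * V) with (sig * basic_count * spread) by (rewrite HNV; ring).
      eapply Rle_trans; [apply entropy_lower|apply entropy_upper; auto]. }
  eapply Rle_trans; [apply log_ratio_le_spread; auto|]. rewrite HNV.
  replace (2 * sig * basic_count ^ 3 / qmin) with (basic_count * (2 * (sig * basic_count ^ 2) / qmin))
    by (field; lra).
  apply Rmult_le_compat_l; lra.
Qed.

End Continuity.

Lemma inverse_density_continuous n g phi0 : zr_rates g n -> in_fug_domain g n phi0 ->
  forall rho, 0 < rho -> exists sig, 0 < sig /\ forall psi, in_fug_domain g n psi ->
  (forall j, (j < n)%nat -> Rabs (density g n psi j - density g n phi0 j) <= sig) ->
  forall j, (j < n)%nat -> Rabs (psi j / phi0 j - 1) <= rho.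
Proof.
  intros Hzr Hd0 rho Hrho.
  assert (HN := basic_count_ge1 n). assert (Hq := qmin_pos n g Hzr phi0 Hd0).
  set (N := basic_count n) in *. set (q := qmin n g phi0) in *.
  set (r := Rmin (1 / 2) (rho / 2)).
  assert (Hr : 0 < r) by (unfold r; apply Rmin_glb_lt; lra).
  assert (N2 : 0 < N ^ 2) by (apply pow_lt; lra). assert (N3 : 0 < N ^ 3) by (apply pow_lt; lra).
  exists (Rmin (q / (4 * N ^ 2)) (q * r / (2 * N ^ 3))). split.
  { apply Rmin_glb_lt; apply Rdiv_lt_0_compat; try lra. apply Rmult_lt_0_compat; lra. }
  intros psi Hd1 Hclose j Hj. set (sig := Rmin (q / (4 * N ^ 2)) (q * r / (2 * N ^ 3))) in *.
  assert (Hsig : 0 <= sig)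
    by (unfold sig; left; apply Rmin_glb_lt; apply Rdiv_lt_0_compat; try lra; apply Rmult_lt_0_compat; lra).
  assert (HD : Rabs (log_ratio phi0 psi j) <= r).
  { eapply Rle_trans; [apply (log_ratio_small n g Hzr phi0 Hd0 psi Hd1 sig); auto; apply Rmin_l|].
    fold N q. apply Rmult_le_reg_r with q; auto.
    replace (2 * sig * N ^ 3 / q * q) with (sig * (2 * N ^ 3)) by (field; lra).
    apply Rle_trans with (q * r / (2 * N ^ 3) * (2 * N ^ 3)); [apply Rmult_le_compat_r; [lra|apply Rmin_r]|].
    right; field; lra. }
  assert (Hpj : 0 < psi j / phi0 j) by (apply Rdiv_lt_0_compat; [apply Hd1|apply Hd0]; auto).
  replace (psi j / phi0 j) with (exp (log_ratio phi0 psi j)) by (unfold log_ratio; apply exp_ln; auto).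
  assert (r <= 1 / 2) by apply Rmin_l. assert (r <= rho / 2) by apply Rmin_r.
  eapply Rle_trans; [apply exp_small; lra|]. lra.
Qed.

Lemma dlim_plus f1 f2 x l1 l2 : derivable_pt_lim f1 x l1 -> derivable_pt_lim f2 x l2 ->
  derivable_pt_lim (fun t => f1 t + f2 t) x (l1 + l2).
Proof. intros H1 H2. exact (derivable_pt_lim_plus f1 f2 x l1 l2 H1 H2). Qed.

Lemma dlim_scal a f x l : derivable_pt_lim f x l -> derivable_pt_lim (fun t => a * f t) x (a * l).
Proof. intros H. exact (derivable_pt_lim_scal f a x l H). Qed.

Lemma dlim_affine a b x : derivable_pt_lim (fun t => a * (t - b)) x a.
Proof.
  assert (H := dlim_scal a (fun t => t - b) x (1 - 0)
    (derivable_pt_lim_minus id (fct_cte b) x 1 0 (derivable_pt_lim_id x) (derivable_pt_lim_const b x))).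
  replace (a * (1 - 0)) with a in H by ring. exact H.
Qed.

Lemma dlim_sumR m (a : nat -> R) (F : nat -> R -> R) x (l : nat -> R) :
  (forall i, (i < m)%nat -> derivable_pt_lim (F i) x (l i)) ->
  derivable_pt_lim (fun t => sumR m (fun i => a i * F i t)) x (sumR m (fun i => a i * l i)).
Proof.
  induction m; intros H; simpl.
  - exact (derivable_pt_lim_const 0 x).
  - apply dlim_plus; [apply IHm; intros; apply H; lia|apply dlim_scal, H; lia].
Qed.

Lemma dlim_local_bound f x l : derivable_pt_lim f x l ->
  exists del, 0 < del /\ forall t, Rabs (t - x) < del -> Rabs (f t - f x) <= (Rabs l + 1) * Rabs (t - x).
Proof.
  intros H. destruct (H 1 Rlt_0_1) as [del Hdel]. exists del; split; [apply cond_pos|].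
  intros t Ht. destruct (Req_dec t x) as [->|Hne].
  - rewrite !Rminus_diag, Rabs_R0, Rmult_0_r. lra.
  - assert (Hh : t - x <> 0) by lra. specialize (Hdel (t - x) Hh Ht).
    replace (x + (t - x)) with t in Hdel by ring.
    assert (Hq : Rabs ((f t - f x) / (t - x)) <= Rabs l + 1).
    { replace ((f t - f x) / (t - x)) with (((f t - f x) / (t - x) - l) + l) by ring.
      eapply Rle_trans; [apply Rabs_triang|]. lra. }
    replace (f t - f x) with ((f t - f x) / (t - x) * (t - x)) by (field; auto).
    rewrite Rabs_mult. apply Rmult_le_compat_r; [apply Rabs_pos|auto].
Qed.

Lemma dlim_quadratic r x M del : 0 < del -> r x = 0 ->
  (forall t, Rabs (t - x) < del -> Rabs (r t) <= M * (t - x) ^ 2) -> derivable_pt_lim r x 0.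
Proof.
  intros Hdel Hr0 Hr eps Heps.
  assert (HM : 0 <= M).
  { specialize (Hr (x + del / 2)). replace (x + del / 2 - x) with (del / 2) in Hr by ring.
    rewrite Rabs_right in Hr by lra. assert (0 < (del / 2) ^ 2) by (apply pow_lt; lra).
    assert (0 <= Rabs (r (x + del / 2))) by apply Rabs_pos.
    destruct (Rle_dec 0 M); auto. assert (M * (del / 2) ^ 2 < 0) by nra. lra. }
  assert (Hd : 0 < Rmin del (eps / (M + 1))) by (apply Rmin_glb_lt; [|apply Rdiv_lt_0_compat]; lra).
  exists (mkposreal _ Hd). intros h Hh Hhd. simpl in Hhd.
  assert (h1 : Rabs h < del) by (eapply Rlt_le_trans; [exact Hhd|apply Rmin_l]).
  assert (h2 : Rabs h < eps / (M + 1)) by (eapply Rlt_le_trans; [exact Hhd|apply Rmin_r]).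
  assert (Hb := Hr (x + h) ltac:(replace (x + h - x) with h by ring; auto)).
  replace (x + h - x) with h in Hb by ring.
  rewrite Hr0, Rminus_0_r, Rminus_0_r.
  assert (Hah : 0 < Rabs h) by (apply Rabs_pos_lt; auto).
  unfold Rdiv. rewrite Rabs_mult, Rabs_inv.
  apply Rle_lt_trans with (M * Rabs h).
  - rewrite <- (pow2_abs h) in Hb. apply Rmult_le_reg_r with (Rabs h); auto.
    rewrite Rmult_assoc, Rinv_l by lra. simpl in Hb |- *. nra.
  - apply Rle_lt_trans with (M * (eps / (M + 1))); [apply Rmult_le_compat_l; lra|].
    apply Rmult_lt_reg_r with (M + 1); [lra|].
    replace (M * (eps / (M + 1)) * (M + 1)) with (M * eps) by (field; lra). nra.
Qed.

Lemma uniform_delta m (Q : nat -> R -> Prop) x :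
  (forall i, (i < m)%nat -> exists del, 0 < del /\ forall t, Rabs (t - x) < del -> Q i t) ->
  exists del, 0 < del /\ forall t, Rabs (t - x) < del -> forall i, (i < m)%nat -> Q i t.
Proof.
  induction m; intros H.
  - exists 1; split; [lra|]. intros; lia.
  - destruct IHm as [d1 [P1 H1]]; [intros; apply H; lia|].
    destruct (H m) as [d2 [P2 H2]]; [lia|].
    exists (Rmin d1 d2); split; [apply Rmin_glb_lt; auto|].
    intros t Ht i Hi. assert (Rmin d1 d2 <= d1) by apply Rmin_l. assert (Rmin d1 d2 <= d2) by apply Rmin_r.
    destruct (Nat.eq_dec i m) as [->|Hne]; [apply H2; lra|apply H1; [lra|lia]].
Qed.

Lemma absorb_quadratic D a b : 0 <= D -> 0 <= b -> D <= a + b * D ^ 2 -> 2 * b * D <= 1 -> D <= 2 * a.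
Proof. intros HD Hb H1 H2. assert (b * D ^ 2 <= D / 2) by (simpl; nra). lra. Qed.

(** Differentiating an inverse.  P t is a curve of fugacities through
    phi0 = P x0 along which the density moves in the direction e_j, and the
    density map has at phi0 the Jacobian Gm in relative coordinates, with a
    quadratic remainder (constant K, radius d1). *)

Section InverseDerivative.
Variable n : nat.
Variable Gm : nat -> nat -> R.
Variable phi0 : nat -> R.
Variable P : R -> nat -> R.
Variables (x0 : R) (j : nat) (K d1 r0 : R).
Hypothesis Hphi0 : forall m, (m < n)%nat -> 0 < phi0 m.
Hypothesis HP0 : forall m, (m < n)%nat -> P x0 m = phi0 m.
Hypothesis Hr0 : 0 < r0.
Hypothesis Hd1 : 0 < d1.
Hypothesis HK : 0 <= K.

Definition rel m t := P t m / phi0 m - 1.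
Definition rel_size t := sumR n (fun m => Rabs (rel m t)).

Definition remainder i t := (if Nat.eqb i j then t - x0 else 0) - sumR n (fun m => Gm i m * rel m t).

Hypothesis Hexp : forall t d, Rabs (t - x0) < r0 ->
  (forall m, (m < n)%nat -> Rabs (rel m t) <= d) -> 0 <= d <= d1 ->
  forall i, (i < n)%nat -> Rabs (remainder i t) <= K * d ^ 2.

Lemma rel_at_x0 m : (m < n)%nat -> rel m x0 = 0.
Proof. intros Hm. unfold rel. rewrite HP0 by auto. field. apply Rgt_not_eq, Hphi0; auto. Qed.

Lemma rel_le_size m t : (m < n)%nat -> Rabs (rel m t) <= rel_size t.
Proof. intros Hm. apply (sumR_ge_term n (fun m => Rabs (rel m t))); auto. intros; apply Rabs_pos. Qed.

Lemma rel_size_nonneg t : 0 <= rel_size t.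
Proof. apply sumR_nonneg. intros; apply Rabs_pos. Qed.

Lemma curve_expansion t : Rabs (t - x0) < r0 -> rel_size t <= d1 -> forall i, (i < n)%nat ->
  Rabs (remainder i t) <= K * rel_size t ^ 2.
Proof. intros Ht Hs. apply Hexp; auto using rel_le_size. split; auto using rel_size_nonneg. Qed.

Lemma remainder_flat B del : 0 <= B -> 0 < del ->
  (forall t, Rabs (t - x0) < del -> rel_size t <= B * Rabs (t - x0)) ->
  forall i, (i < n)%nat -> derivable_pt_lim (remainder i) x0 0.
Proof.
  intros HB Hdel Hsize i Hi.
  apply (dlim_quadratic (remainder i) x0 (K * B ^ 2) (Rmin (Rmin del r0) (d1 / (B + 1)))).
  - repeat apply Rmin_glb_lt; auto. apply Rdiv_lt_0_compat; lra.
  - unfold remainder.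
    rewrite (sumR_ext n _ (fun _ => 0)), sumR_const by (intros m Hm; rewrite rel_at_x0; auto; ring).
    destruct (Nat.eqb i j); ring.
  - intros t Ht.
    assert (H1 : Rabs (t - x0) < del) by (eapply Rlt_le_trans; [exact Ht|eapply Rle_trans; apply Rmin_l]).
    assert (H2 : Rabs (t - x0) < r0)
      by (eapply Rlt_le_trans; [exact Ht|eapply Rle_trans; [apply Rmin_l|apply Rmin_r]]).
    assert (H3 : Rabs (t - x0) < d1 / (B + 1)) by (eapply Rlt_le_trans; [exact Ht|apply Rmin_r]).
    assert (Hs := Hsize t H1). assert (Hs0 := rel_size_nonneg t).
    assert (Hsd : rel_size t <= d1).
    { apply Rle_trans with (B * (d1 / (B + 1))); [apply Rle_trans with (B * Rabs (t - x0)); auto|].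
      - apply Rmult_le_compat_l; lra.
      - apply Rmult_le_reg_r with (B + 1); [lra|].
        replace (B * (d1 / (B + 1)) * (B + 1)) with (B * d1) by (field; lra). nra. }
    eapply Rle_trans; [apply curve_expansion; auto|].
    rewrite <- (pow2_abs (t - x0)).
    replace (K * B ^ 2 * Rabs (t - x0) ^ 2) with (K * (B * Rabs (t - x0)) ^ 2) by ring.
    apply Rmult_le_compat_l; auto. apply pow_incr; auto.
Qed.

Section Differentiable.
Variable c : nat -> R.
Hypothesis Hder : forall m, (m < n)%nat -> derivable_pt_lim (fun t => P t m) x0 (c m).

Lemma rel_derivable m : (m < n)%nat -> derivable_pt_lim (rel m) x0 (c m / phi0 m).
Proof.
  intros Hm. assert (H := dlim_plus _ _ x0 _ _ (dlim_scal (/ phi0 m) _ x0 _ (Hder m Hm))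
    (derivable_pt_lim_const (-1) x0)).
  rewrite Rplus_0_r, Rmult_comm in H.
  apply (derivable_pt_lim_ext _ (rel m)) in H; [exact H|].
  intros t. unfold rel, fct_cte, Rdiv. ring.
Qed.

Lemma rel_size_linear_of_derivable : exists B del, 0 <= B /\ 0 < del /\
  forall t, Rabs (t - x0) < del -> rel_size t <= B * Rabs (t - x0).
Proof.
  exists (sumR n (fun m => Rabs (c m / phi0 m) + 1)).
  destruct (uniform_delta n (fun m t => Rabs (rel m t) <= (Rabs (c m / phi0 m) + 1) * Rabs (t - x0)) x0)
    as [del [Hdel Hloc]].
  { intros m Hm. destruct (dlim_local_bound _ _ _ (rel_derivable m Hm)) as [del [Hdel Hb]].
    exists del; split; auto. intros t Ht. specialize (Hb t Ht). rewrite rel_at_x0, Rminus_0_r in Hb; auto. }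
  exists del. split; [|split; auto].
  - apply sumR_nonneg; intros m _; assert (0 <= Rabs (c m / phi0 m)) by apply Rabs_pos; lra.
  - intros t Ht. rewrite <- (Rmult_comm (Rabs (t - x0))), <- sumR_scal.
    apply sumR_le. intros m Hm. rewrite Rmult_comm. apply Hloc; auto.
Qed.

(* Chain rule for density o P = affine map: Gm (c / phi0) = e_j. *)
Lemma inverse_derivative_constraint :
  forall i, (i < n)%nat -> sumR n (fun m => Gm i m * (c m / phi0 m)) = if Nat.eqb i j then 1 else 0.
Proof.
  intros i Hi. destruct rel_size_linear_of_derivable as [B [del [HB [Hdel Hsize]]]].
  assert (Hsum := dlim_plus _ _ x0 _ _ (dlim_sumR n (Gm i) rel x0 _ rel_derivable)
    (remainder_flat B del HB Hdel Hsize i Hi)).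
  apply (derivable_pt_lim_ext _ (fun t => (if Nat.eqb i j then 1 else 0) * (t - x0))) in Hsum;
    [|intros t; unfold remainder; destruct (Nat.eqb i j); ring].
  rewrite Rplus_0_r in Hsum. exact (uniqueness_limite _ _ _ _ Hsum (dlim_affine _ _ x0)).
Qed.

End Differentiable.

Section Diagonal.
Variable c : R.
Hypothesis Hc : 0 < c.
Hypothesis Hoff : forall i m, (i < n)%nat -> (m < n)%nat -> i <> m -> Gm i m = 0.
Hypothesis Hdiag : forall i, (i < n)%nat -> Gm i i = phi0 i / c.
Hypothesis Hcont : forall rho, 0 < rho -> exists s, 0 < s /\
  forall t, Rabs (t - x0) < s -> forall m, (m < n)%nat -> Rabs (rel m t) <= rho.

Lemma remainder_diagonal i t : (i < n)%nat ->
  remainder i t = (if Nat.eqb i j then t - x0 else 0) - (P t i - phi0 i) / c.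
Proof.
  intros Hi. unfold remainder. rewrite (sumR_single n _ i Hi).
  - rewrite Hdiag by auto. unfold rel. f_equal. field. split; [lra|apply Rgt_not_eq, Hphi0; auto].
  - intros m Hm Hne. rewrite Hoff; auto. ring.
Qed.

Lemma diagonal_rel_bound t : Rabs (t - x0) < r0 -> rel_size t <= d1 -> forall m, (m < n)%nat ->
  Rabs (rel m t) <= c / minR n phi0 * (Rabs (t - x0) + K * rel_size t ^ 2).
Proof.
  intros Ht Hs m Hm. assert (Hpm := Hphi0 m Hm).
  assert (Hmin : 0 < minR n phi0 <= phi0 m) by (split; [apply minR_pos; auto|apply minR_le; auto]).
  assert (E := curve_expansion t Ht Hs m Hm). rewrite remainder_diagonal in E by auto.
  assert (Hrel : rel m t = (P t m - phi0 m) / c * (c / phi0 m)) by (unfold rel; field; lra).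
  assert (Hdel : Rabs (if Nat.eqb m j then t - x0 else 0) <= Rabs (t - x0))
    by (destruct (Nat.eqb m j); [lra|rewrite Rabs_R0; apply Rabs_pos]).
  assert (Hq : Rabs ((P t m - phi0 m) / c) <= Rabs (t - x0) + K * rel_size t ^ 2).
  { replace ((P t m - phi0 m) / c) with ((if Nat.eqb m j then t - x0 else 0)
      - ((if Nat.eqb m j then t - x0 else 0) - (P t m - phi0 m) / c)) by ring.
    eapply Rle_trans; [apply Rabs_triang|]. rewrite Rabs_Ropp. lra. }
  rewrite Hrel, Rabs_mult, Rmult_comm. apply Rmult_le_compat; auto using Rabs_pos.
  rewrite Rabs_right by (apply Rle_ge, div_nonneg; lra).
  apply Rmult_le_compat_l; [lra|]. apply Rinv_le_contravar; lra.
Qed.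

(* Continuity of P and the diagonal expansion force a linear bound on rel_size. *)
Lemma rel_size_linear_of_diagonal : exists B del, 0 <= B /\ 0 < del /\
  forall t, Rabs (t - x0) < del -> rel_size t <= B * Rabs (t - x0).
Proof.
  set (pmin := minR n phi0). assert (Hpm : 0 < pmin) by (apply minR_pos; auto).
  assert (Hn : 0 <= INR n) by apply pos_INR.
  set (a := INR n * (c / pmin)).
  assert (Ha : 0 <= a) by (apply Rmult_le_pos; [lra|apply div_nonneg; lra]).
  assert (HaK : 0 < 2 * a * K + 1) by nra.
  set (s1 := Rmin d1 (1 / (2 * a * K + 1))).
  assert (Hs1 : 0 < s1) by (apply Rmin_glb_lt; [|apply Rdiv_lt_0_compat]; lra).
  destruct (Hcont (s1 / (INR n + 1))) as [s [Hs Hclose]]; [apply Rdiv_lt_0_compat; lra|].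
  exists (2 * a), (Rmin s r0). split; [lra|split; [apply Rmin_glb_lt; auto|]].
  intros t Ht. assert (Hts : Rabs (t - x0) < s) by (eapply Rlt_le_trans; [exact Ht|apply Rmin_l]).
  assert (Htr : Rabs (t - x0) < r0) by (eapply Rlt_le_trans; [exact Ht|apply Rmin_r]).
  assert (HS : rel_size t <= s1).
  { apply Rle_trans with (INR n * (s1 / (INR n + 1))).
    - unfold rel_size. rewrite <- sumR_const. apply sumR_le. intros m Hm. apply Hclose; auto.
    - apply Rmult_le_reg_r with (INR n + 1); [lra|].
      replace (INR n * (s1 / (INR n + 1)) * (INR n + 1)) with (INR n * s1) by (field; lra). nra. }
  assert (HS1 : rel_size t <= d1) by (eapply Rle_trans; [exact HS|apply Rmin_l]).
  assert (HS2 : rel_size t * (2 * a * K + 1) <= 1).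
  { apply Rle_trans with (1 / (2 * a * K + 1) * (2 * a * K + 1)); [|right; field; lra].
    apply Rmult_le_compat_r; [lra|]. eapply Rle_trans; [exact HS|apply Rmin_r]. }
  assert (Hsz := rel_size_nonneg t).
  rewrite Rmult_assoc. apply absorb_quadratic with (a * K); auto; [apply Rmult_le_pos; auto| |nra].
  unfold rel_size at 1. eapply Rle_trans; [apply sumR_le; intros m Hm; apply diagonal_rel_bound; auto|].
  rewrite sumR_const. unfold a, pmin. right; ring.
Qed.

Lemma diagonal_inverse_derivative :
  forall i, (i < n)%nat -> derivable_pt_lim (fun t => P t i) x0 (if Nat.eqb i j then c else 0).
Proof.
  intros i Hi. destruct rel_size_linear_of_diagonal as [B [del [HB [Hdel Hsize]]]].
  assert (Hr := dlim_scal (- c) _ x0 _ (remainder_flat B del HB Hdel Hsize i Hi)).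
  assert (Hsum := dlim_plus _ _ x0 _ _ (dlim_affine (if Nat.eqb i j then c else 0) x0 x0) Hr).
  assert (H := dlim_plus _ _ x0 _ _ Hsum (derivable_pt_lim_const (phi0 i) x0)).
  rewrite Rmult_0_r, !Rplus_0_r in H.
  apply (derivable_pt_lim_ext _ (fun t => P t i)) in H; [exact H|].
  intros t. unfold fct_cte. rewrite remainder_diagonal by auto. destruct (Nat.eqb i j); field; lra.
Qed.

End Diagonal.

End InverseDerivative.

(** The Frame condition.  Near a0 the fugacity map Phi inverts the density,
    and g~_i(a) = Phi(a)_i; so (FC) says that Phi has Jacobian lambda I at a0,
    i.e. that the Jacobian Cov(phi0) diag(1/phi0) of the density map is I/lambda. *)

Section Frame.
Variable n : nat.
Variable g : nat -> (nat -> nat) -> R.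
Hypothesis Hzr : zr_rates g n.
Hypothesis Hinv : INV g n.
Variable Phi : (nat -> R) -> (nat -> R).
Variable a0 : nat -> R.
Variable eps0 : R.
Hypothesis Heps0 : 0 < eps0.
Hypothesis HPhi : forall a : nat -> R, (forall i, (i < n)%nat -> Rabs (a i - a0 i) < eps0) ->
  in_fug_domain g n (Phi a) /\ forall i, (i < n)%nat -> density g n (Phi a) i = a i.

Lemma curve_in_domain j t : Rabs (t - a0 j) < eps0 ->
  in_fug_domain g n (Phi (upd a0 j t)) /\
  forall i, (i < n)%nat -> density g n (Phi (upd a0 j t)) i - a0 i = if Nat.eqb i j then t - a0 j else 0.
Proof.
  intros Ht. destruct (HPhi (upd a0 j t)) as [D E].
  - intros i Hi. unfold upd. destruct (Nat.eqb_spec i j); subst; auto. rewrite Rminus_diag, Rabs_R0; auto.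
  - split; auto. intros i Hi. rewrite E by auto. unfold upd. destruct (Nat.eqb_spec i j); subst; ring.
Qed.

Lemma base_in_domain : in_fug_domain g n (Phi a0) /\ forall i, (i < n)%nat -> density g n (Phi a0) i = a0 i.
Proof. apply HPhi. intros i Hi. rewrite Rminus_diag, Rabs_R0; auto. Qed.

Lemma upd_base j : upd a0 j (a0 j) = a0.
Proof. apply functional_extensionality; intros i. unfold upd. destruct (Nat.eqb_spec i j); subst; auto. Qed.

Lemma FC_with_iff lam : FC_with g n Phi a0 lam <->
  forall i j, (i < n)%nat -> (j < n)%nat ->
  derivable_pt_lim (fun t => Phi (upd a0 j t) i) (a0 j) (if Nat.eqb i j then lam else 0).
Proof.
  assert (Hloc : forall i j, (i < n)%nat -> forall z, a0 j - eps0 < z < a0 j + eps0 ->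
    gtilde g n Phi i (upd a0 j z) = Phi (upd a0 j z) i).
  { intros i j Hi z Hz. destruct (curve_in_domain j z) as [Hd _]; [apply Rabs_def1; lra|].
    apply expect_rate; auto; [apply Hd|apply dom_summable; auto]. }
  assert (Hint : forall j, a0 j - eps0 < a0 j < a0 j + eps0) by (intros; lra).
  split; intros H i j Hi Hj;
    apply (derivable_pt_lim_locally_ext _ _ _ _ _ _ (Hint j)) with (2 := H i j Hi Hj);
    intros z Hz; rewrite Hloc; auto.
Qed.

Lemma curve_expansion_bound : exists K d1, 0 < d1 /\ 0 <= K /\ forall j t d,
  Rabs (t - a0 j) < eps0 ->
  (forall m, (m < n)%nat -> Rabs (rel (Phi a0) (fun t => Phi (upd a0 j t)) m t) <= d) ->
  0 <= d <= d1 -> forall i, (i < n)%nat ->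
  Rabs ((if Nat.eqb i j then t - a0 j else 0)
        - sumR n (fun m => Cov g n (Phi a0) i m * rel (Phi a0) (fun t => Phi (upd a0 j t)) m t)) <= K * d ^ 2.
Proof.
  destruct base_in_domain as [Hd0 Hden0].
  destruct (density_expansion n g (Phi a0) Hzr Hd0) as [K [d1 [Hd1 [HK Hexp]]]].
  exists K, d1. split; [|split]; auto. intros j t d Ht Hrel Hd i Hi.
  destruct (curve_in_domain j t Ht) as [_ Hden]. rewrite <- Hden, <- Hden0 by auto.
  apply Hexp; auto. intros m Hm. unfold rel. field. apply Rgt_not_eq, Hd0; auto.
Qed.

Lemma curve_continuous j : forall rho, 0 < rho -> exists s, 0 < s /\
  forall t, Rabs (t - a0 j) < s -> forall m, (m < n)%nat ->
  Rabs (rel (Phi a0) (fun t => Phi (upd a0 j t)) m t) <= rho.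
Proof.
  intros rho Hrho. destruct base_in_domain as [Hd0 Hden0].
  destruct (inverse_density_continuous n g (Phi a0) Hzr Hd0 rho Hrho) as [s [Hs Hcont]].
  exists (Rmin s eps0). split; [apply Rmin_glb_lt; auto|]. intros t Ht m Hm.
  assert (Hte : Rabs (t - a0 j) < eps0) by (eapply Rlt_le_trans; [exact Ht|apply Rmin_r]).
  destruct (curve_in_domain j t Hte) as [Hd Hden]. apply Hcont; auto.
  intros i Hi. rewrite Hden0, Hden by auto.
  destruct (Nat.eqb i j); [|rewrite Rabs_R0; lra]. assert (Rmin s eps0 <= s) by apply Rmin_l. lra.
Qed.

Lemma FC_with_covariance lam : FC_with g n Phi a0 lam ->
  forall i j, (i < n)%nat -> (j < n)%nat ->
  Cov g n (Phi a0) i j * lam = if Nat.eqb i j then Phi a0 i else 0.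
Proof.
  intros HFC i j Hi Hj. destruct base_in_domain as [[Hp _] _].
  destruct curve_expansion_bound as [K [d1 [Hd1 [HK Hexp]]]].
  assert (C := inverse_derivative_constraint n (Cov g n (Phi a0)) (Phi a0) (fun t => Phi (upd a0 j t))
    (a0 j) j K d1 eps0 Hp (fun m _ => f_equal (fun a => Phi a m) (upd_base j)) Heps0 Hd1 HK (Hexp j)
    (fun m => if Nat.eqb m j then lam else 0) (fun m Hm => proj1 (FC_with_iff lam) HFC m j Hm Hj) i Hi).
  rewrite (sumR_single n _ j Hj), Nat.eqb_refl in C
    by (intros m _ Hne; destruct (Nat.eqb_spec m j); [lia|unfold Rdiv; ring]).
  assert (0 < Phi a0 j) by auto.
  destruct (Nat.eqb_spec i j) as [->|Hne].
  - apply (Rmult_eq_compat_r (Phi a0 j)) in C. rewrite Rmult_1_l in C. rewrite <- C. field. lra.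
  - apply (Rmult_eq_compat_r (Phi a0 j)) in C. rewrite Rmult_0_l in C. rewrite <- C. field. lra.
Qed.

Lemma covariance_FC_with c : 0 < c ->
  (forall i j, (i < n)%nat -> (j < n)%nat -> i <> j -> Cov g n (Phi a0) i j = 0) ->
  (forall i, (i < n)%nat -> Cov g n (Phi a0) i i = Phi a0 i / c) ->
  FC_with g n Phi a0 c.
Proof.
  intros Hc Hoff Hdiag. apply FC_with_iff. intros i j Hi Hj.
  destruct base_in_domain as [[Hp _] _].
  destruct curve_expansion_bound as [K [d1 [Hd1 [HK Hexp]]]].
  exact (diagonal_inverse_derivative n (Cov g n (Phi a0)) (Phi a0) (fun t => Phi (upd a0 j t))
    (a0 j) j K d1 eps0 Hp (fun m _ => f_equal (fun a => Phi a m) (upd_base j)) Heps0 Hd1 HK (Hexp j)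
    c Hc Hoff Hdiag (curve_continuous j) i Hi).
Qed.

Lemma gtilde_base i : (i < n)%nat -> gtilde g n Phi i a0 = Phi a0 i.
Proof.
  intros Hi. destruct base_in_domain as [Hd0 _].
  apply expect_rate; auto; [apply Hd0|apply dom_summable; auto].
Qed.

Lemma Gamma_diag_pos i : (i < n)%nat -> 0 < Gamma g n Phi i i a0.
Proof. intros Hi. apply covariance_diag_pos; auto. apply base_in_domain. Qed.

Lemma FC_with_ratio lam : FC_with g n Phi a0 lam ->
  forall i, (i < n)%nat -> gtilde g n Phi i a0 / Gamma g n Phi i i a0 = lam.
Proof.
  intros Hlam i Hi. assert (E := FC_with_covariance lam Hlam i i Hi Hi). rewrite Nat.eqb_refl in E.
  rewrite gtilde_base, <- E by auto. change (Gamma g n Phi i i a0) with (Cov g n (Phi a0) i i).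
  field. apply Rgt_not_eq, Gamma_diag_pos; auto.
Qed.

Lemma FC_with_offdiag lam : FC_with g n Phi a0 lam ->
  forall i j, (i < n)%nat -> (j < n)%nat -> i <> j -> Gamma g n Phi i j a0 = 0.
Proof.
  intros Hlam i j Hi Hj Hne.
  assert (Hlam0 : lam <> 0).
  { intros ->. assert (E := FC_with_covariance 0 Hlam i i Hi Hi).
    rewrite Nat.eqb_refl, Rmult_0_r in E. destruct base_in_domain as [[Hp _] _]. specialize (Hp i Hi). lra. }
  assert (E := FC_with_covariance lam Hlam i j Hi Hj). destruct (Nat.eqb_spec i j); [lia|].
  apply Rmult_integral in E. tauto.
Qed.

Lemma diagonal_ratio_FC : (1 <= n)%nat ->
  (forall i j, (i < n)%nat -> (j < n)%nat -> i <> j -> Gamma g n Phi i j a0 = 0) ->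
  (forall i j, (i < n)%nat -> (j < n)%nat ->
     gtilde g n Phi i a0 / Gamma g n Phi i i a0 = gtilde g n Phi j a0 / Gamma g n Phi j j a0) ->
  FC g n Phi a0.
Proof.
  intros Hn Hoff Hrat. destruct base_in_domain as [[Hp _] _].
  exists (gtilde g n Phi 0%nat a0 / Gamma g n Phi 0%nat 0%nat a0).
  apply covariance_FC_with; auto.
  - rewrite gtilde_base by lia. apply Rdiv_lt_0_compat; [apply Hp|apply Gamma_diag_pos]; lia.
  - intros i Hi. rewrite <- (Hrat i 0%nat Hi ltac:(lia)), gtilde_base by auto.
    change (Cov g n (Phi a0) i i) with (Gamma g n Phi i i a0).
    field. split; [apply Rgt_not_eq, Gamma_diag_pos; auto|apply Rgt_not_eq, Hp; auto].
Qed.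

End Frame.

Theorem proposition4p2 (n : nat) (g : nat -> (nat -> nat) -> R)
  (Phi : (nat -> R) -> (nat -> R)) (a0 : nat -> R) :
  (1 <= n)%nat -> zr_rates g n -> INV g n ->
  (forall i, (i < n)%nat -> 0 < a0 i) ->
  fugacity_map_near g n Phi a0 ->
  (FC g n Phi a0 <->
     ((forall i j, (i < n)%nat -> (j < n)%nat -> i <> j -> Gamma g n Phi i j a0 = 0) /\
      (forall i j, (i < n)%nat -> (j < n)%nat ->
         gtilde g n Phi i a0 / Gamma g n Phi i i a0 = gtilde g n Phi j a0 / Gamma g n Phi j j a0)))
  /\ (forall lam, FC_with g n Phi a0 lam ->
        forall i, (i < n)%nat -> gtilde g n Phi i a0 / Gamma g n Phi i i a0 = lam).
Proof.
  intros Hn Hzr Hinv _ [eps0 [Heps0 HPhi]].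
  assert (Hratio := FC_with_ratio n g Hzr Hinv Phi a0 eps0 Heps0 HPhi).
  split; [split|exact Hratio].
  - intros [lam Hlam]. split.
    + exact (FC_with_offdiag n g Hzr Hinv Phi a0 eps0 Heps0 HPhi lam Hlam).
    + intros i j Hi Hj. rewrite !(Hratio lam Hlam); auto.
  - intros [Hoff Hrat]. exact (diagonal_ratio_FC n g Hzr Hinv Phi a0 eps0 Heps0 HPhi Hn Hoff Hrat).
Qed.
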